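(* Let $\Psi,\Lambda,\Upsilon$ and $\delta$ be as in the context, put $\bar\Lambda=\Lambda(\bar U,\vec0,0,0)$, and let $\{\bar U^\varepsilon\}\subseteq\mathbb R^n$ with $\bar U^\varepsilon\to\bar U$ as $\varepsilon\to0^+$. If $\delta$ is sufficiently small, there exist constants $c_V,\theta,c_W\in(0,1)$ independent of $\varepsilon$ such that for every sufficiently small $\varepsilon>0$ and every $\bar W_{cs}\in\mathbb R^k$ with $|\bar W_{cs}|\le\theta\delta$, the system $$V^\varepsilon(\zeta)=\bar U^\varepsilon+\int_{\delta/\varepsilon}^{\zeta}\Psi\big(V^\varepsilon(y),W^\varepsilon_{cs}(y),\varepsilon y,\varepsilon\big)W^\varepsilon_{cs}(y)\,dy,$$ $$W^\varepsilon_{cs}(\zeta)=e^{\bar\Lambda\zeta-\varepsilon\zeta^2I_k/2}\bar W_{cs}+\int_0^\zeta e^{\bar\Lambda(\zeta-y)-\varepsilon\zeta^2I_k/2+\varepsilon y^2I_k/2}\Big\{\big[\Lambda(\cdot)-\bar\Lambda\big]-\varepsilon y\big[\Upsilon(\cdot)-I_k\big]\Big\}W^\varepsilon_{cs}(y)\,dy,$$ where $(\cdot)=\big(V^\varepsilon(y),W^\varepsilon_{cs}(y),\varepsilon y,\varepsilon\big)$, admits a unique continuous solution $(V^\varepsilon,W^\varepsilon_{cs})$ on $[0,\delta/\varepsilon]$ satisfying, for every $\zeta\in[0,\delta/\varepsilon]$, $$|V^\varepsilon(\zeta)-\bar U|\le c_V\delta,\qquad |W^\varepsilon_{cs}(\zeta)|\le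 c_W e^{-c\zeta/2}\delta.$$
   Context: $A:\mathbb R^n\to\mathbb R^{n\times n}$ smooth and strictly hyperbolic with eigenvalues satisfying $\lambda_1(U)<\dots<\lambda_k(U)<-c<0<c<\lambda_{k+1}(U)<\dots<\lambda_n(U)$ for all $U$ (some $1\le k\le n-1$, $c>0$). $\bar U\in\mathbb R^n$ is fixed. $\Psi(V,W_{cs},\xi,\varepsilon)\in\mathbb R^{n\times k}$, $\Lambda(V,W_{cs},\xi,\varepsilon)\in\mathbb R^{k\times k}$, $\Upsilon(V,W_{cs},\xi,\varepsilon)\in\mathbb R^{k\times k}$ are smooth functions defined for $|V-\bar U|\le\delta$, $|W_{cs}|\le\delta$, $|\xi|\le\delta$, $|\varepsilon|\le\delta$, with $\Lambda(\bar U,\vec0,0,0)=\mathrm{Diag}(\lambda_1(\bar U),\dots,\lambda_k(\bar U))$ and $\Upsilon(\bar U,\vec0,0,0)=I_k$; they are the coefficients of the reduction $V'=\Psi W_{cs}$, $W_{cs}'=(\Lambda-\xi\Upsilon)W_{cs}$, $\xi'=\varepsilon$, $\varepsilon'=0$ of the self-similar viscous profile system to a center-stable manifold about $(\bar U,\vec0,0,0)$ (Lemma 3.1). *)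

From Stdlib Require Import Reals Lra ClassicalEpsilon.
From Stdlib Require Import Factorial.
From Stdlib Require Fin.
Open Scope R_scope.

Definition vec (N : nat) := Fin.t N -> R.
Definition mat (N P : nat) := Fin.t N -> Fin.t P -> R.

Fixpoint fsum (N : nat) : (Fin.t N -> R) -> R :=
  match N return (Fin.t N -> R) -> R with
  | O => fun _ => 0
  | S N' => fun f => f Fin.F1 + fsum N' (fun i => f (Fin.FS i))
  end.

Definition vnorm {N : nat} (v : vec N) : R := sqrt (fsum N (fun i => v i ^ 2)).
Definition vsub {N : nat} (u v : vec N) : vec N := fun i => u i - v i.
Definition vzero (N : nat) : vec N := fun _ => 0.

Definition mv {N P : nat} (M : mat N P) (w : vec P) : vec N :=
  fun i => fsum P (fun j => M i j * w j).
Definition mmul {N P Q : nat} (M : mat N P) (M' : mat P Q) : mat N Q :=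
  fun i j => fsum P (fun l => M i l * M' l j).
Definition mid (N : nat) : mat N N := fun i j => if Fin.eq_dec i j then 1 else 0.
Definition madd {N P : nat} (M M' : mat N P) : mat N P := fun i j => M i j + M' i j.
Definition msub {N P : nat} (M M' : mat N P) : mat N P := fun i j => M i j - M' i j.
Definition mscal {N P : nat} (a : R) (M : mat N P) : mat N P := fun i j => a * M i j.
Definition mdiag {N : nat} (d : Fin.t N -> R) : mat N N :=
  fun i j => if Fin.eq_dec i j then d i else 0.

Fixpoint mpow {N : nat} (M : mat N N) (q : nat) : mat N N :=
  match q with O => mid N | S q' => mmul M (mpow M q') end.

Definition mexp {N : nat} (M : mat N N) : mat N N :=
  fun i j => epsilon (inhabits 0)
    (fun l => Un_cv (fun p => sum_f_R0 (fun q => mpow M q i j / INR (fact q)) p) l).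

Definition upd {N : nat} (x : vec N) (j : Fin.t N) (a : R) : vec N :=
  fun i => if Fin.eq_dec i j then a else x i.

Definition cont_on {N : nat} (D : vec N -> Prop) (f : vec N -> R) : Prop :=
  forall x, D x -> forall e, 0 < e -> exists d, 0 < d /\
    forall y, D y -> vnorm (vsub y x) < d -> Rabs (f y - f x) < e.

(* C^r on D (D intended open): continuous, and all first partial derivatives
   exist on D and are C^(r-1) on D *)
Fixpoint Ck {N : nat} (r : nat) (D : vec N -> Prop) (f : vec N -> R) : Prop :=
  match r with
  | O => cont_on D f
  | S r' => cont_on D f /\
      forall j : Fin.t N, exists g : vec N -> R,
        (forall x, D x -> derivable_pt_lim (fun t => f (upd x j (x j + t))) 0 (g x))
        /\ Ck r' D g
  end.

Definition smooth_on {N : nat} (D : vec N -> Prop) (f : vec N -> R) : Prop :=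
  forall r, Ck r D f.

(* splitting a point of R^(n+k+2) into (V, W, xi, eps) *)
Definition pV {n k : nat} (x : vec (n + k + 2)) : vec n := fun i => x (Fin.L 2 (Fin.L k i)).
Definition pW {n k : nat} (x : vec (n + k + 2)) : vec k := fun i => x (Fin.L 2 (Fin.R n i)).
Definition pxi {n k : nat} (x : vec (n + k + 2)) : R := x (Fin.R (n + k) Fin.F1).
Definition peps {n k : nat} (x : vec (n + k + 2)) : R := x (Fin.R (n + k) (Fin.FS Fin.F1)).

Definition box {n k : nat} (Ubar : vec n) (d0 : R) (x : vec (n + k + 2)) : Prop :=
  vnorm (vsub (pV x) Ubar) < d0 /\ vnorm (pW x) < d0 /\ Rabs (pxi x) < d0 /\ Rabs (peps x) < d0.

Definition smooth_coef {n k P Q : nat} (D : vec (n + k + 2) -> Prop)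
    (F : vec n -> vec k -> R -> R -> mat P Q) : Prop :=
  forall i j, smooth_on D (fun x => F (pV x) (pW x) (pxi x) (peps x) i j).

Definition RInt_eq (f : R -> R) (a b I : R) : Prop :=
  exists pr : Riemann_integrable f a b, RiemannInt pr = I.

Definition cont_int (a b : R) (f : R -> R) : Prop :=
  forall x, a <= x <= b -> forall e, 0 < e -> exists d, 0 < d /\
    forall y, a <= y <= b -> Rabs (y - x) < d -> Rabs (f y - f x) < e.

Definition good_solution {n k : nat}
    (Psi : vec n -> vec k -> R -> R -> mat n k)
    (Lam Ups : vec n -> vec k -> R -> R -> mat k k)
    (Ubar Ueps : vec n) (Wbar : vec k) (c delta eps cV cW : R)
    (V : R -> vec n) (W : R -> vec k) : Prop :=
  let T := delta / eps in
  let Lb := Lam Ubar (vzero k) 0 0 in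
  (forall i, cont_int 0 T (fun y => V y i)) /\
  (forall i, cont_int 0 T (fun y => W y i)) /\
  (forall z, 0 <= z <= T -> forall i : Fin.t n, exists I,
     RInt_eq (fun y => mv (Psi (V y) (W y) (eps * y) eps) (W y) i) T z I /\
     V z i = Ueps i + I) /\
  (forall z, 0 <= z <= T -> forall i : Fin.t k, exists I,
     RInt_eq (fun y =>
        mv (mexp (madd (mscal (z - y) Lb)
                       (mscal (- (eps * z ^ 2 / 2) + eps * y ^ 2 / 2) (mid k))))
           (mv (msub (msub (Lam (V y) (W y) (eps * y) eps) Lb)
                     (mscal (eps * y) (msub (Ups (V y) (W y) (eps * y) eps) (mid k))))
               (W y)) i) 0 z I /\
     W z i = mv (mexp (msub (mscal z Lb) (mscal (eps * z ^ 2 / 2) (mid k)))) Wbar i + I) /\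
  (forall z, 0 <= z <= T ->
     vnorm (vsub (V z) Ubar) <= cV * delta /\
     vnorm (W z) <= cW * exp (- c * z / 2) * delta).

From Stdlib Require Import Reals Lra Lia List FunctionalExtensionality ClassicalEpsilon.
From Stdlib Require Fin.
From Coquelicot Require Import Coquelicot.
Open Scope R_scope.

(** The solution is obtained by the contraction mapping principle, carried out
    by hand.  Write [T = delta/eps].  Since [Lam(Ubar,0,0,0)] is the diagonal
    matrix of the stable eigenvalues [lambda_i < -c], every matrix exponential
    of the system is a scalar propagator [e^{lambda_i z - eps z^2/2}], and the
    system becomes a fixed-point problem [(V,W) = Phi(V,W)] for an explicit
    integral operator.  Smooth coefficients are Lipschitz near the base point
    (mean value theorem, one coordinate at a time), so on pairs with
    [|V - Ubar|_1 <= A0] and [|W|_1 <= B0 e^{-c y/2}] the right-hand sides are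
    bounded and Lipschitz, and integrating against the exponential weights gives
    (1) invariance of a class of such pairs and (2) halving of the weighted
    distance [max (sup |V - V'|, lam sup e^{c y/2} |W - W'|)], provided [delta] is
    small.  Picard iterates then converge geometrically to a fixed point, any
    two fixed points coincide, and the constants are chosen at the end. *)

Lemma fsum_ext N (f g : Fin.t N -> R) : (forall i, f i = g i) -> fsum N f = fsum N g.
Proof.
  induction N; simpl; intros H; [reflexivity|].
  rewrite H, (IHN (fun i => f (Fin.FS i)) (fun i => g (Fin.FS i))); auto.
Qed.

Lemma fsum_plus N (f g : Fin.t N -> R) : fsum N (fun i => f i + g i) = fsum N f + fsum N g.
Proof. induction N; simpl; [lra|]. rewrite (IHN (fun i => f (Fin.FS i)) (fun i => g (Fin.FS i))); lra. Qed.

Lemma fsum_scal N (a : R) (f : Fin.t N -> R) : fsum N (fun i => a * f i) = a * fsum N f.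
Proof. induction N; simpl; [lra|]. rewrite (IHN (fun i => f (Fin.FS i))); lra. Qed.

Lemma fsum_le N (f g : Fin.t N -> R) : (forall i, f i <= g i) -> fsum N f <= fsum N g.
Proof.
  induction N; simpl; intros H; [lra|].
  pose proof (H Fin.F1). pose proof (IHN (fun i => f (Fin.FS i)) (fun i => g (Fin.FS i)) (fun i => H _)). lra.
Qed.

Lemma fsum_const N a : fsum N (fun _ => a) = INR N * a.
Proof. induction N; simpl fsum; [simpl; lra|]. rewrite IHN, S_INR; lra. Qed.

Lemma fsum_zero N (f : Fin.t N -> R) : (forall i, f i = 0) -> fsum N f = 0.
Proof. intros H. rewrite (fsum_ext N f (fun _ => 0)) by exact H. rewrite fsum_const. ring. Qed.

Lemma fsum_nonneg N (f : Fin.t N -> R) : (forall i, 0 <= f i) -> 0 <= fsum N f.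
Proof. intros H. rewrite <- (fsum_zero N (fun _ => 0)) by reflexivity. apply fsum_le; auto. Qed.

Lemma fsum_abs N (f : Fin.t N -> R) : Rabs (fsum N f) <= fsum N (fun i => Rabs (f i)).
Proof.
  induction N; simpl; [rewrite Rabs_R0; lra|].
  eapply Rle_trans; [apply Rabs_triang|]. pose proof (IHN (fun i => f (Fin.FS i))). lra.
Qed.

Lemma fsum_term N (f : Fin.t N -> R) j : (forall i, 0 <= f i) -> f j <= fsum N f.
Proof.
  induction N; intros H; [inversion j|].
  revert f H. apply (Fin.caseS' j); simpl; intros.
  - pose proof (fsum_nonneg N (fun i => f (Fin.FS i)) (fun i => H _)). lra.
  - pose proof (IHN (fun i => f (Fin.FS i)) p (fun i => H _)). pose proof (H Fin.F1). lra.
Qed.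

Lemma fsum_delta N (b : Fin.t N -> R) i :
  fsum N (fun j => if Fin.eq_dec i j then b j else 0) = b i.
Proof.
  induction N; [inversion i|].
  revert b. apply (Fin.caseS' i); simpl; intros.
  - rewrite fsum_zero; [destruct (Fin.eq_dec Fin.F1 Fin.F1); [lra|congruence]|].
    intros j. destruct (Fin.eq_dec Fin.F1 (Fin.FS j)) as [E|]; [inversion E|reflexivity].
  - rewrite <- (IHN (fun j => b (Fin.FS j)) p), Rplus_0_l. apply fsum_ext.
    intros j. destruct (Fin.eq_dec (Fin.FS p) (Fin.FS j)) as [E|E];
      destruct (Fin.eq_dec p j) as [E'|E']; auto.
    + apply Fin.FS_inj in E. congruence.
    + subst. congruence.
Qed.

Lemma fsum_app N M (f : Fin.t (N + M) -> R) :
  fsum (N + M) f = fsum N (fun i => f (Fin.L M i)) + fsum M (fun j => f (Fin.R N j)).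
Proof.
  induction N; simpl; [rewrite Rplus_0_l; reflexivity|].
  rewrite (IHN (fun i => f (Fin.FS i))). simpl. rewrite Rplus_assoc; reflexivity.
Qed.

(** The ℓ¹ norm: it is the norm in which all estimates are carried out; it is
    equivalent to the Euclidean norm [vnorm] of the statement. *)

Definition norm1 {N} (v : vec N) := fsum N (fun i => Rabs (v i)).

Lemma norm1_nonneg N (v : vec N) : 0 <= norm1 v.
Proof. apply fsum_nonneg. intros; apply Rabs_pos. Qed.

Lemma abs_le_norm1 N (v : vec N) i : Rabs (v i) <= norm1 v.
Proof. apply (fsum_term N (fun i => Rabs (v i))). intros; apply Rabs_pos. Qed.

Lemma vnorm_le_norm1 N (v : vec N) : vnorm v <= norm1 v.
Proof.
  assert (Hsq : fsum N (fun i => v i ^ 2) <= norm1 v ^ 2).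
  { unfold norm1. induction N; [simpl; lra|]. cbn [fsum].
    pose proof (IHN (fun i => v (Fin.FS i))).
    pose proof (fsum_nonneg N (fun i => Rabs (v (Fin.FS i))) (fun i => Rabs_pos _)).
    pose proof (Rabs_pos (v Fin.F1)).
    rewrite <- (pow2_abs (v Fin.F1)). nra. }
  unfold vnorm. rewrite <- (sqrt_Rsqr (norm1 v)) by apply norm1_nonneg.
  apply sqrt_le_1_alt. unfold Rsqr. lra.
Qed.

Lemma abs_le_vnorm N (v : vec N) i : Rabs (v i) <= vnorm v.
Proof.
  unfold vnorm. rewrite <- (sqrt_Rsqr (Rabs (v i))) by apply Rabs_pos.
  apply sqrt_le_1_alt. unfold Rsqr. rewrite <- Rabs_mult, Rabs_right by (apply Rle_ge, Rle_0_sqr).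
  replace (v i * v i) with (v i ^ 2) by ring.
  apply (fsum_term N (fun i => v i ^ 2)). intros; apply pow2_ge_0.
Qed.

Lemma norm1_le_vnorm N (v : vec N) : norm1 v <= INR N * vnorm v.
Proof. unfold norm1. rewrite <- fsum_const. apply fsum_le. intros; apply abs_le_vnorm. Qed.

Lemma norm1_le_const N (v : vec N) B : (forall i, Rabs (v i) <= B) -> norm1 v <= INR N * B.
Proof. intros H. unfold norm1. rewrite <- fsum_const. apply fsum_le. auto. Qed.

Lemma norm1_sub_diag N (v : vec N) : norm1 (vsub v v) = 0.
Proof. apply fsum_zero. intros i. unfold vsub. rewrite Rminus_diag. apply Rabs_R0. Qed.

Lemma norm1_sub_zero N (v : vec N) : norm1 (vsub v (vzero N)) = norm1 v.
Proof. apply fsum_ext. intros i. unfold vsub, vzero. rewrite Rminus_0_r. reflexivity. Qed.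

Lemma norm1_sub_sym N (x y : vec N) : norm1 (vsub x y) = norm1 (vsub y x).
Proof. apply fsum_ext. intros i. unfold vsub. rewrite <- Rabs_Ropp. f_equal. ring. Qed.

Lemma norm1_triangle N (x y z : vec N) : norm1 (vsub x z) <= norm1 (vsub x y) + norm1 (vsub y z).
Proof.
  unfold norm1, vsub. rewrite <- fsum_plus. apply fsum_le. intros i.
  replace (x i - z i) with ((x i - y i) + (y i - z i)) by ring. apply Rabs_triang.
Qed.

Lemma mv_bound P Q (M : mat P Q) w i B : (forall j, Rabs (M i j) <= B) ->
  Rabs (mv M w i) <= B * norm1 w.
Proof.
  intros H. unfold mv, norm1. eapply Rle_trans; [apply fsum_abs|].
  rewrite <- fsum_scal. apply fsum_le. intros j. rewrite Rabs_mult.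
  apply Rmult_le_compat_r; auto. apply Rabs_pos.
Qed.

Lemma mv_diff P Q (M M' : mat P Q) w w' i Bm Dm : (forall j, Rabs (M i j) <= Bm) ->
  (forall j, Rabs (M i j - M' i j) <= Dm) ->
  Rabs (mv M w i - mv M' w' i) <= Bm * norm1 (vsub w w') + Dm * norm1 w'.
Proof.
  intros H1 H2. unfold mv.
  replace (fsum Q (fun j => M i j * w j) - fsum Q (fun j => M' i j * w' j)) with
    (fsum Q (fun j => M i j * (w j - w' j) + (M i j - M' i j) * w' j)).
  2:{ replace (fsum Q (fun j => M i j * w j) - fsum Q (fun j => M' i j * w' j)) with
        (fsum Q (fun j => M i j * w j + (-1) * (M' i j * w' j))) by (rewrite fsum_plus, fsum_scal; ring).
      apply fsum_ext; intros; ring. }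
  eapply Rle_trans; [apply fsum_abs|]. unfold norm1, vsub. rewrite <- !fsum_scal, <- fsum_plus.
  apply fsum_le. intros j. eapply Rle_trans; [apply Rabs_triang|]. rewrite !Rabs_mult.
  apply Rplus_le_compat; apply Rmult_le_compat_r; auto; apply Rabs_pos.
Qed.

Lemma entry_bound P Q (M : mat P Q) : exists B, 0 <= B /\ forall i j, Rabs (M i j) <= B.
Proof.
  exists (fsum P (fun i => fsum Q (fun j => Rabs (M i j)))). split.
  - apply fsum_nonneg; intros; apply fsum_nonneg; intros; apply Rabs_pos.
  - intros i j. eapply Rle_trans; [|apply (fsum_term P (fun i => fsum Q (fun j => Rabs (M i j))))].
    + apply (fsum_term Q (fun j => Rabs (M i j))). intros; apply Rabs_pos.
    + intros; apply fsum_nonneg; intros; apply Rabs_pos.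
Qed.

Lemma upd_same N (x : vec N) j a : upd x j a j = a.
Proof. unfold upd. destruct (Fin.eq_dec j j); congruence. Qed.

Lemma upd_other N (x : vec N) j a i : i <> j -> upd x j a i = x i.
Proof. unfold upd. destruct (Fin.eq_dec i j); congruence. Qed.

Lemma upd_upd N (x : vec N) j a b : upd (upd x j a) j b = upd x j b.
Proof. apply functional_extensionality; intros i. unfold upd. destruct (Fin.eq_dec i j); auto. Qed.

Lemma upd_id N (x : vec N) j : upd x j (x j) = x.
Proof. apply functional_extensionality; intros i. unfold upd. destruct (Fin.eq_dec i j); subst; auto. Qed.

Lemma derivable_pt_lim_shift (phi : R -> R) t l :
  derivable_pt_lim (fun s => phi (t + s)) 0 l -> derivable_pt_lim phi t l.
Proof.
  intros H eps He. destruct (H eps He) as [d Hd]. exists d. intros h Hh Hhd.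
  specialize (Hd h Hh Hhd). replace (t + (0 + h)) with (t + h) in Hd by ring.
  replace (t + 0) with t in Hd by ring. auto.
Qed.

Definition between {N} (x y z : vec N) := forall i, Rmin (x i) (y i) <= z i <= Rmax (x i) (y i).

Lemma between_norm1 N (x y z x0 : vec N) : between x y z ->
  norm1 (vsub z x0) <= norm1 (vsub x x0) + norm1 (vsub y x0).
Proof.
  intros H. unfold norm1. rewrite <- fsum_plus. apply fsum_le. intros i.
  specialize (H i). unfold vsub. unfold Rmin, Rmax in H.
  destruct (Rle_dec (x i) (y i)); unfold Rabs; repeat destruct Rcase_abs; lra.
Qed.

(** The proof changes one
    coordinate at a time and applies the mean value theorem to each step. *)
Section Lipschitz.
Variable N : nat.
Variable f : vec N -> R.
Variable x0 : vec N.
Variables R0 L : R.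
Hypothesis Hpartial : forall j, exists g : vec N -> R,
  (forall z, norm1 (vsub z x0) <= R0 -> derivable_pt_lim (fun t => f (upd z j (z j + t))) 0 (g z)) /\
  (forall z, norm1 (vsub z x0) <= R0 -> Rabs (g z) <= L).

Lemma lipschitz_one_coordinate (x y h : vec N) j :
  norm1 (vsub x x0) + norm1 (vsub y x0) <= R0 -> between x y h ->
  Rabs (f (upd h j (y j)) - f h) <= L * Rabs (y j - x j).
Proof.
  intros HR Hb. destruct (Hpartial j) as [g [Hg1 Hg2]].
  set (phi := fun t => f (upd h j (h j + t))).
  assert (Hbz : forall a, Rmin 0 (y j - h j) <= a <= Rmax 0 (y j - h j) ->
                 between x y (upd h j (h j + a))).
  { intros a Ha i. destruct (Fin.eq_dec i j) as [E|E].
    - subst. rewrite upd_same. specialize (Hb j). unfold Rmin, Rmax in *.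
      destruct (Rle_dec 0 (y j - h j)); destruct (Rle_dec (x j) (y j)); lra.
    - rewrite upd_other by auto. apply Hb. }
  destruct (MVT_abs phi (fun t => g (upd h j (h j + t))) 0 (y j - h j)) as [a [Ha1 Ha2]].
  { intros a Ha. apply derivable_pt_lim_shift. unfold phi.
    replace (fun s => f (upd h j (h j + (a + s)))) with
      (fun s => f (upd (upd h j (h j + a)) j (upd h j (h j + a) j + s))).
    2:{ apply functional_extensionality; intros s. rewrite upd_upd, upd_same.
        f_equal. f_equal. ring. }
    apply Hg1. eapply Rle_trans; [apply (between_norm1 _ x y)|]; auto. }
  unfold phi in Ha1. replace (h j + (y j - h j)) with (y j) in Ha1 by ring.
  rewrite Rplus_0_r, upd_id in Ha1. rewrite Ha1.
  apply Rmult_le_compat; try apply Rabs_pos.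
  - apply Hg2. eapply Rle_trans; [apply (between_norm1 _ x y)|]; auto.
  - specialize (Hb j). unfold Rmin, Rmax in Hb. rewrite Rminus_0_r.
    destruct (Rle_dec (x j) (y j)); unfold Rabs; repeat destruct Rcase_abs; lra.
Qed.

Fixpoint all_fin (M : nat) : list (Fin.t M) :=
  match M with O => nil | S M' => Fin.F1 :: map Fin.FS (all_fin M') end.

Lemma all_fin_complete M (i : Fin.t M) : In i (all_fin M).
Proof.
  induction M; [inversion i|]. apply (Fin.caseS' i); simpl; [auto|].
  intros p. right. apply in_map. auto.
Qed.

Lemma all_fin_sum M (w : Fin.t M -> R) : fold_right Rplus 0 (map w (all_fin M)) = fsum M w.
Proof. induction M; simpl; auto. rewrite map_map, (IHM (fun i => w (Fin.FS i))). auto. Qed.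

Definition hybrid (x y : vec N) (l : list (Fin.t N)) : vec N :=
  fun i => if in_dec Fin.eq_dec i l then y i else x i.

Lemma hybrid_between x y l : between x y (hybrid x y l).
Proof. intros i. unfold hybrid. destruct in_dec; unfold Rmin, Rmax; destruct Rle_dec; lra. Qed.

Lemma hybrid_cons x y j l : hybrid x y (j :: l) = upd (hybrid x y l) j (y j).
Proof.
  apply functional_extensionality; intros i. unfold hybrid, upd.
  destruct (Fin.eq_dec i j) as [E|E].
  - subst. destruct in_dec as [_|C]; auto. exfalso; apply C; left; auto.
  - destruct (in_dec Fin.eq_dec i (j :: l)) as [H|H]; destruct (in_dec Fin.eq_dec i l) as [H'|H']; auto.
    + destruct H; [congruence|contradiction].
    + exfalso. apply H. right. auto.
Qed.

Lemma lipschitz_hybrid x y l : norm1 (vsub x x0) + norm1 (vsub y x0) <= R0 ->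
  Rabs (f (hybrid x y l) - f x) <= L * fold_right Rplus 0 (map (fun j => Rabs (y j - x j)) l).
Proof.
  intros HR. induction l as [|j l IH]; simpl.
  - replace (hybrid x y nil) with x by (apply functional_extensionality; intros i; reflexivity).
    rewrite Rminus_diag, Rabs_R0. lra.
  - rewrite hybrid_cons. pose proof (lipschitz_one_coordinate x y (hybrid x y l) j HR (hybrid_between x y l)).
    replace (f (upd (hybrid x y l) j (y j)) - f x) with
      ((f (upd (hybrid x y l) j (y j)) - f (hybrid x y l)) + (f (hybrid x y l) - f x)) by ring.
    eapply Rle_trans; [apply Rabs_triang|]. lra.
Qed.

Lemma lipschitz_of_partials x y : norm1 (vsub x x0) + norm1 (vsub y x0) <= R0 ->
  Rabs (f y - f x) <= L * norm1 (vsub y x).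
Proof.
  intros HR. pose proof (lipschitz_hybrid x y (all_fin N) HR) as H.
  replace (hybrid x y (all_fin N)) with y in H.
  - rewrite all_fin_sum in H. exact H.
  - apply functional_extensionality; intros i. unfold hybrid.
    destruct in_dec as [_|C]; auto. exfalso; apply C, all_fin_complete.
Qed.

End Lipschitz.

Lemma fin_uniform N (P : Fin.t N -> R -> R -> Prop) :
  (forall i r L r' L', P i r L -> 0 < r' <= r -> L <= L' -> P i r' L') ->
  (forall i, exists r L, 0 < r /\ P i r L) -> exists r L, 0 < r /\ forall i, P i r L.
Proof.
  induction N; intros Hm H.
  - exists 1, 0. split; [lra|]. intros i; inversion i.
  - destruct (H Fin.F1) as [r1 [L1 [Hr1 H1]]].
    destruct (IHN (fun i => P (Fin.FS i))) as [r2 [L2 [Hr2 H2]]]; [intros; eapply Hm; eauto|intros; apply H|].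
    exists (Rmin r1 r2), (Rmax L1 L2). split; [apply Rmin_glb_lt; auto|].
    intros i. apply (Fin.caseS' i).
    + eapply Hm; [apply H1| |apply Rmax_l]. split; [apply Rmin_glb_lt; auto|apply Rmin_l].
    + intros p. eapply Hm; [apply H2| |apply Rmax_r]. split; [apply Rmin_glb_lt; auto|apply Rmin_r].
Qed.

(** A [C^1] function is Lipschitz on a small ℓ¹ ball around any point of its
    (open) domain: continuity of the partial derivatives bounds them nearby. *)
Lemma C1_locally_lipschitz N (D : vec N -> Prop) f x0 R1 : 0 < R1 ->
  (forall z, norm1 (vsub z x0) <= R1 -> D z) -> Ck 1 D f ->
  exists rho L, 0 < rho /\ 0 <= L /\
    forall x y, norm1 (vsub x x0) <= rho -> norm1 (vsub y x0) <= rho ->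
      Rabs (f y - f x) <= L * norm1 (vsub y x).
Proof.
  intros HR1 HD [_ Hder].
  assert (Dx0 : D x0) by (apply HD; rewrite norm1_sub_diag; lra).
  destruct (fin_uniform N (fun j r L => exists g : vec N -> R,
     (forall z, norm1 (vsub z x0) <= r -> derivable_pt_lim (fun t => f (upd z j (z j + t))) 0 (g z)) /\
     (forall z, norm1 (vsub z x0) <= r -> Rabs (g z) <= L))) as [r [L [Hr HP]]].
  { intros i r L r' L' [g [G1 G2]] Hr' HL. exists g. split; intros z Hz.
    - apply G1; lra.
    - specialize (G2 z ltac:(lra)); lra. }
  { intros j. destruct (Hder j) as [g [G1 G2]]. simpl in G2.
    destruct (G2 x0 Dx0 1 ltac:(lra)) as [d [Hd Hg]].
    pose proof (Rmin_l R1 (d/2)). pose proof (Rmin_r R1 (d/2)).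
    exists (Rmin R1 (d/2)), (Rabs (g x0) + 1). split; [apply Rmin_glb_lt; lra|].
    exists g. split; intros z Hz.
    - apply G1, HD. lra.
    - assert (D z) by (apply HD; lra).
      pose proof (vnorm_le_norm1 _ (vsub z x0)).
      specialize (Hg z H1 ltac:(lra)). pose proof (Rabs_triang_inv (g z) (g x0)). lra. }
  exists (r/2), (Rmax L 0). split; [lra|]. split; [apply Rmax_r|].
  intros x y Hx Hy. apply (lipschitz_of_partials N f x0 r (Rmax L 0)); [|lra].
  intros j. destruct (HP j) as [g [G1 G2]]. exists g; split; auto.
  intros z Hz. specialize (G2 z Hz). pose proof (Rmax_l L 0). lra.
Qed.

Definition sel2 (a b : R) (q : Fin.t 2) : R := match q with @Fin.F1 _ => a | @Fin.FS _ _ => b end.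

Definition pack4 {n k} (V : vec n) (W : vec k) (a b : R) : vec (n + k + 2) :=
  fun p => Fin.case_L_R' (fun _ => R) p (fun q => Fin.case_L_R' (fun _ => R) q V W) (sel2 a b).

Lemma pV_pack4 n k (V : vec n) (W : vec k) a b : pV (pack4 V W a b) = V.
Proof. apply functional_extensionality; intros i. unfold pV, pack4. rewrite !Fin.case_L_R'_L. auto. Qed.

Lemma pW_pack4 n k (V : vec n) (W : vec k) a b : pW (pack4 V W a b) = W.
Proof.
  apply functional_extensionality; intros i. unfold pW, pack4.
  rewrite Fin.case_L_R'_L, Fin.case_L_R'_R. auto.
Qed.

Lemma pxi_pack4 n k (V : vec n) (W : vec k) a b : pxi (pack4 V W a b) = a.
Proof. unfold pxi, pack4. rewrite Fin.case_L_R'_R. auto. Qed.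

Lemma peps_pack4 n k (V : vec n) (W : vec k) a b : peps (pack4 V W a b) = b.
Proof. unfold peps, pack4. rewrite Fin.case_L_R'_R. auto. Qed.

Definition dist4 {n k} (V : vec n) (W : vec k) a b V' W' a' b' :=
  norm1 (vsub V V') + norm1 (vsub W W') + Rabs (a - a') + Rabs (b - b').

Lemma dist4_nonneg n k (V : vec n) (W : vec k) a b V' W' a' b' : 0 <= dist4 V W a b V' W' a' b'.
Proof.
  unfold dist4. pose proof (norm1_nonneg _ (vsub V V')). pose proof (norm1_nonneg _ (vsub W W')).
  pose proof (Rabs_pos (a - a')). pose proof (Rabs_pos (b - b')). lra.
Qed.

Lemma dist4_diag n k (V : vec n) (W : vec k) a b : dist4 V W a b V W a b = 0.
Proof. unfold dist4. rewrite !norm1_sub_diag, !Rminus_diag, Rabs_R0. ring. Qed.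

Lemma norm1_split n k (x y : vec (n + k + 2)) :
  norm1 (vsub x y) = dist4 (pV x) (pW x) (pxi x) (peps x) (pV y) (pW y) (pxi y) (peps y).
Proof.
  unfold dist4, norm1. rewrite fsum_app, (fsum_app n k). simpl fsum at 3.
  unfold pV, pW, pxi, peps, vsub. simpl. ring.
Qed.

Lemma coef_entry_lipschitz n k (Ubar : vec n) d0 (F : vec n -> vec k -> R -> R -> R) : 0 < d0 ->
  Ck 1 (box Ubar d0) (fun x => F (pV x) (pW x) (pxi x) (peps x)) ->
  exists rho L, 0 < rho /\ 0 <= L /\ forall V W a b V' W' a' b',
    dist4 V W a b Ubar (vzero k) 0 0 <= rho -> dist4 V' W' a' b' Ubar (vzero k) 0 0 <= rho ->
    Rabs (F V' W' a' b' - F V W a b) <= L * dist4 V' W' a' b' V W a b.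
Proof.
  intros Hd0 Hck. set (x0 := pack4 Ubar (vzero k) 0 0).
  destruct (C1_locally_lipschitz _ (box Ubar d0) (fun x => F (pV x) (pW x) (pxi x) (peps x)) x0 (d0/2))
    as [rho [L [Hr [HL Hlip]]]]; auto; [lra| |].
  { intros z Hz. rewrite norm1_split in Hz. unfold x0, dist4 in Hz.
    rewrite pV_pack4, pW_pack4, pxi_pack4, peps_pack4, norm1_sub_zero, !Rminus_0_r in Hz.
    pose proof (norm1_nonneg _ (vsub (pV z) Ubar)). pose proof (norm1_nonneg _ (pW z)).
    pose proof (Rabs_pos (pxi z)). pose proof (Rabs_pos (peps z)).
    pose proof (vnorm_le_norm1 _ (vsub (pV z) Ubar)). pose proof (vnorm_le_norm1 _ (pW z)).
    unfold box. lra. }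
  exists rho, L. split; auto. split; auto. intros V W a b V' W' a' b' H1 H2.
  specialize (Hlip (pack4 V W a b) (pack4 V' W' a' b')). unfold x0 in Hlip.
  rewrite !norm1_split, !pV_pack4, !pW_pack4, !pxi_pack4, !peps_pack4 in Hlip. auto.
Qed.

Definition lipschitz_near {n k P Q} (Ubar : vec n) (rho L : R) (F : vec n -> vec k -> R -> R -> mat P Q) :=
  forall i j V W a b V' W' a' b',
    dist4 V W a b Ubar (vzero k) 0 0 <= rho -> dist4 V' W' a' b' Ubar (vzero k) 0 0 <= rho ->
    Rabs (F V' W' a' b' i j - F V W a b i j) <= L * dist4 V' W' a' b' V W a b.

Lemma lipschitz_near_mono n k P Q (Ubar : vec n) rho L rho' L' (F : vec n -> vec k -> R -> R -> mat P Q) :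
  rho' <= rho -> L <= L' -> lipschitz_near Ubar rho L F -> lipschitz_near Ubar rho' L' F.
Proof.
  intros Hr HL H i j V W a b V' W' a' b' H1 H2. eapply Rle_trans; [apply H; lra|].
  apply Rmult_le_compat_r; auto. apply dist4_nonneg.
Qed.

Lemma coef_lipschitz n k P Q (Ubar : vec n) d0 (F : vec n -> vec k -> R -> R -> mat P Q) : 0 < d0 ->
  smooth_coef (box Ubar d0) F -> exists rho L, 0 < rho /\ 0 <= L /\ lipschitz_near Ubar rho L F.
Proof.
  intros Hd0 Hs.
  set (Lip := fun i j rho L => forall V W a b V' W' a' b',
    dist4 V W a b Ubar (vzero k) 0 0 <= rho -> dist4 V' W' a' b' Ubar (vzero k) 0 0 <= rho ->
    Rabs (F V' W' a' b' i j - F V W a b i j) <= L * dist4 V' W' a' b' V W a b).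
  assert (Hmono : forall i j r L r' L', Lip i j r L -> 0 < r' <= r -> L <= L' -> Lip i j r' L').
  { unfold Lip. intros i j r L r' L' H Hr' HLL. intros. eapply Rle_trans; [apply H; lra|].
    apply Rmult_le_compat_r; auto. apply dist4_nonneg. }
  destruct (fin_uniform P (fun i rho L => forall j, Lip i j rho L)) as [r [L [Hr HP]]].
  { intros; eapply Hmono; eauto. }
  { intros i. destruct (fin_uniform Q (Lip i)) as [r [L [Hr HP]]]; [apply Hmono| |eauto].
    intros j. destruct (coef_entry_lipschitz n k Ubar d0 (fun V W a b => F V W a b i j) Hd0 (Hs i j 1%nat))
      as [rho [L [H1 [_ H3]]]].
    exists rho, L. split; auto. }
  exists r, (Rmax L 0). split; [auto|split; [apply Rmax_r|]].
  intros i j. apply (Hmono i j r L r (Rmax L 0) (HP i j)); [lra|apply Rmax_l].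
Qed.

(** Exponentials of diagonal matrices are computed entrywise.  At the base
    point [Lam = Diag(lambda_1..lambda_k)], so every matrix exponential in the
    integral system is diagonal. *)

Lemma mmul_diag N (d e : Fin.t N -> R) : mmul (mdiag d) (mdiag e) = mdiag (fun i => d i * e i).
Proof.
  apply functional_extensionality; intros i. apply functional_extensionality; intros j.
  unfold mmul, mdiag.
  rewrite (fsum_ext _ _ (fun l => if Fin.eq_dec i l then d i * (if Fin.eq_dec l j then e l else 0) else 0)).
  - rewrite fsum_delta. destruct (Fin.eq_dec i j); ring.
  - intros l. destruct (Fin.eq_dec i l); [subst; auto|ring].
Qed.

Lemma mpow_diag N (d : Fin.t N -> R) q : mpow (mdiag d) q = mdiag (fun i => d i ^ q).
Proof.
  induction q; simpl.
  - apply functional_extensionality; intros i. apply functional_extensionality; intros j. reflexivity.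
  - rewrite IHq, mmul_diag. reflexivity.
Qed.

Lemma mexp_diag N (d : Fin.t N -> R) : mexp (mdiag d) = mdiag (fun i => exp (d i)).
Proof.
  apply functional_extensionality; intros i. apply functional_extensionality; intros j.
  unfold mexp. match goal with |- epsilon _ ?P = _ => set (PP := P) end.
  assert (HP : PP (if Fin.eq_dec i j then exp (d i) else 0)).
  { unfold PP. destruct (Fin.eq_dec i j) as [E|E].
    - eapply Un_cv_ext; [|apply (Exp_prop.E1_cvg (d i))]. intros p. unfold Exp_prop.E1.
      apply sum_eq. intros q _. rewrite mpow_diag. unfold mdiag.
      destruct (Fin.eq_dec i j); [unfold Rdiv; ring|contradiction].
    - intros e He. exists 0%nat. intros p _. unfold Rdist.
      rewrite (sum_eq _ (fun _ => 0)), sum_cte, Rmult_0_l, Rminus_0_r, Rabs_R0; [lra|].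
      intros q _. rewrite mpow_diag. unfold mdiag.
      destruct (Fin.eq_dec i j); [contradiction|unfold Rdiv; ring]. }
  exact (UL_sequence _ _ _ (epsilon_spec (inhabits 0) PP (ex_intro _ _ HP)) HP).
Qed.

Lemma mv_diag N (e : Fin.t N -> R) w i : mv (mdiag e) w i = e i * w i.
Proof.
  unfold mv, mdiag. rewrite (fsum_ext _ _ (fun j => if Fin.eq_dec i j then e i * w j else 0)).
  - apply fsum_delta.
  - intros j; destruct (Fin.eq_dec i j); [auto|ring].
Qed.

Lemma diag_add N (a b : R) (d : Fin.t N -> R) :
  madd (mscal a (mdiag d)) (mscal b (mid N)) = mdiag (fun i => a * d i + b).
Proof.
  apply functional_extensionality; intros i. apply functional_extensionality; intros j.
  unfold madd, mscal, mdiag, mid. destruct (Fin.eq_dec i j); ring.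
Qed.

Lemma diag_sub N (a b : R) (d : Fin.t N -> R) :
  msub (mscal a (mdiag d)) (mscal b (mid N)) = mdiag (fun i => a * d i - b).
Proof.
  apply functional_extensionality; intros i. apply functional_extensionality; intros j.
  unfold msub, mscal, mdiag, mid. destruct (Fin.eq_dec i j); ring.
Qed.

(** Real-valued forms of Coquelicot's continuity rules (the generic ones do not
    unify with functions [R -> R] directly). *)

Lemma cont_mult (f g : R -> R) x : continuous f x -> continuous g x -> continuous (fun y => f y * g y) x.
Proof. intros. apply (continuous_mult f g); auto. Qed.

Lemma cont_plus (f g : R -> R) x : continuous f x -> continuous g x -> continuous (fun y => f y + g y) x.
Proof. intros. apply (continuous_plus f g); auto. Qed.

Lemma cont_minus (f g : R -> R) x : continuous f x -> continuous g x -> continuous (fun y => f y - g y) x.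
Proof. intros. apply (continuous_minus f g); auto. Qed.

Lemma cont_fsum N (f : Fin.t N -> R -> R) x : (forall i, continuous (f i) x) ->
  continuous (fun y => fsum N (fun i => f i y)) x.
Proof.
  induction N; intros H; simpl; [apply continuous_const|].
  apply cont_plus; [apply H|]. apply (IHN (fun i => f (Fin.FS i))). intros; apply H.
Qed.

Lemma cont_eps (f : R -> R) x : continuous f x <->
  forall e, 0 < e -> exists d, 0 < d /\ forall y, Rabs (y - x) < d -> Rabs (f y - f x) < e.
Proof.
  split.
  - intros H e He. apply continuity_pt_filterlim in H. rewrite continuity_pt_locally in H.
    destruct (H (mkposreal e He)) as [d Hd]. exists d. split; [apply cond_pos|].
    intros y Hy. apply (Hd y). apply Hy.
  - intros H. apply continuity_pt_filterlim. apply continuity_pt_locally. intros e.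
    destruct (H e (cond_pos e)) as [d [Hd H']]. exists (mkposreal d Hd). intros y Hy. apply H'. apply Hy.
Qed.

Lemma cont_dominated (F G : R -> R) x : (forall y, Rabs (F y - F x) <= G y) ->
  continuous G x -> G x = 0 -> continuous F x.
Proof.
  intros H HG H0. apply cont_eps. intros e He. destruct (proj1 (cont_eps G x) HG e He) as [d [Hd H']].
  exists d. split; auto. intros y Hy. specialize (H' y Hy). rewrite H0, Rminus_0_r in H'.
  eapply Rle_lt_trans; [apply H|]. eapply Rle_lt_trans; [apply Rle_abs|]; auto.
Qed.

Lemma cont_uniform_limit (u : nat -> R -> R) (f : R -> R) (B : nat -> R) x :
  (forall p, continuous (u p) x) -> (forall p y, Rabs (f y - u p y) <= B p) ->
  (forall e, 0 < e -> exists p, B p < e) -> continuous f x.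
Proof.
  intros Hu Hb HB. apply cont_eps. intros e He.
  destruct (HB (e/3) ltac:(lra)) as [p Hp].
  destruct (proj1 (cont_eps _ x) (Hu p) (e/3) ltac:(lra)) as [d [Hd H]].
  exists d; split; auto. intros y Hy. specialize (H y Hy). pose proof (Hb p y). pose proof (Hb p x).
  replace (f y - f x) with ((f y - u p y) + (u p y - u p x) - (f x - u p x)) by ring.
  eapply Rle_lt_trans; [apply Rabs_triang|]. eapply Rle_lt_trans; [apply Rplus_le_compat_r, Rabs_triang|].
  rewrite Rabs_Ropp. lra.
Qed.

(** Clamping to [0,T] turns functions given on [0,T] into functions on R, so
    that the global continuity and integrability results of Coquelicot apply. *)

Definition clamp (T y : R) := Rmax 0 (Rmin T y).

Lemma clamp_in T y : 0 <= T -> 0 <= clamp T y <= T.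
Proof. intros. unfold clamp, Rmax, Rmin. repeat destruct Rle_dec; lra. Qed.

Lemma clamp_id T y : 0 <= y <= T -> clamp T y = y.
Proof. intros. unfold clamp, Rmax, Rmin. repeat destruct Rle_dec; lra. Qed.

Lemma cont_clamp T x : 0 <= T -> continuous (clamp T) x.
Proof.
  intros HT. apply cont_eps. intros e He. exists e. split; auto. intros y Hy.
  eapply Rle_lt_trans; [|exact Hy]. unfold clamp, Rmax, Rmin.
  repeat destruct Rle_dec; unfold Rabs; repeat destruct Rcase_abs; lra.
Qed.

Lemma cont_int_of_continuous (f g : R -> R) T : (forall y, continuous g y) ->
  (forall y, 0 <= y <= T -> f y = g y) -> cont_int 0 T f.
Proof.
  intros Hg E x Hx e He. destruct (proj1 (cont_eps g x) (Hg x) e He) as [d [Hd H]].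
  exists d. split; auto. intros y Hy Hyx. rewrite !E by auto. auto.
Qed.

Lemma cont_RInt (f : R -> R) a x : (forall y, continuous f y) -> continuous (fun z => RInt f a z) x.
Proof.
  intros H. apply (continuous_RInt_1 f a x). exists (mkposreal 1 Rlt_0_1). intros y _.
  apply (RInt_correct f a y), ex_RInt_continuous. intros; apply H.
Qed.

Lemma ex_RInt_cont (f : R -> R) a b : (forall y, continuous f y) -> ex_RInt f a b.
Proof. intros H. apply (@ex_RInt_continuous R_CompleteNormedModule). intros; apply H. Qed.

Lemma RInt_abs_le (f g : R -> R) a b : a <= b -> ex_RInt f a b -> ex_RInt g a b ->
  (forall y, a <= y <= b -> Rabs (f y) <= g y) -> Rabs (RInt f a b) <= RInt g a b.
Proof.
  intros Hab Hf Hg H. apply Rabs_le. split.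
  - rewrite <- (Ropp_involutive (RInt f a b)). apply Ropp_le_contravar.
    replace (- RInt f a b) with (RInt (fun y => - f y) a b) by (apply (RInt_opp f a b Hf)).
    apply RInt_le; auto; [apply (ex_RInt_opp f a b Hf)|].
    intros y Hy. specialize (H y ltac:(lra)). apply Rabs_le_between in H. lra.
  - apply RInt_le; auto. intros y Hy. specialize (H y ltac:(lra)). apply Rabs_le_between in H. lra.
Qed.

Lemma RInt_exp (K al a b : R) : al <> 0 ->
  RInt (fun y => K * exp (al * y)) a b = K / al * (exp (al * b) - exp (al * a)).
Proof.
  intros Hal. apply is_RInt_unique.
  replace (K / al * (exp (al * b) - exp (al * a))) with
    (minus ((fun y => K / al * exp (al * y)) b) ((fun y => K / al * exp (al * y)) a))
    by (unfold minus, plus, opp; simpl; ring).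
  apply (is_RInt_derive (fun y => K / al * exp (al * y)) (fun y => K * exp (al * y))).
  - intros x _. auto_derive; auto. field. auto.
  - intros x _. apply (@ex_derive_continuous R_AbsRing R_NormedModule). auto_derive. exact I.
Qed.

Lemma ex_RInt_exp (K al a b : R) : ex_RInt (fun y => K * exp (al * y)) a b.
Proof. apply ex_RInt_cont. intros. apply (@ex_derive_continuous R_AbsRing R_NormedModule). auto_derive. exact I. Qed.

Lemma scale_le_1 a e : 0 <= a -> 0 < e <= 1 -> 0 <= a * e <= a.
Proof. intros. split; [apply Rmult_le_pos; lra|]. rewrite <- (Rmult_1_r a) at 2. apply Rmult_le_compat_l; lra. Qed.

Lemma lipschitz_bound_weighted Kb Kl B0 s lam e : 0 <= Kl -> 0 <= B0 -> 0 <= s -> 1 <= lam -> 0 < e <= 1 ->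
  Kb * (s / lam * e) + Kl * (s + s / lam * e) * (B0 * e) <= (Kb / lam + Kl * (1 + 1 / lam) * B0) * s * e.
Proof.
  intros HKl HB0 Hs Hlam He.
  assert (Hsl : 0 <= s / lam) by (apply Rmult_le_pos; [lra|left; apply Rinv_0_lt_compat; lra]).
  pose proof (scale_le_1 (s / lam) e Hsl He).
  assert (Kl * (s + s / lam * e) * (B0 * e) <= Kl * (s + s / lam) * (B0 * e)).
  { apply Rmult_le_compat_r; [apply Rmult_le_pos; lra|]. apply Rmult_le_compat_l; lra. }
  replace ((Kb / lam + Kl * (1 + 1 / lam) * B0) * s * e)
    with (Kb * (s / lam * e) + Kl * (s + s / lam) * (B0 * e)) by (field; lra).
  lra.
Qed.

Lemma exp_le (x y : R) : x <= y -> exp x <= exp y.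
Proof. intros H. destruct (Rle_lt_or_eq_dec x y H); [left; apply exp_increasing; auto|subst; lra]. Qed.

Lemma tail_integral_bound (f : R -> R) c K z T : 0 < c -> 0 <= K -> 0 <= z <= T -> ex_RInt f z T ->
  (forall y, z <= y <= T -> Rabs (f y) <= K * exp (- c * y / 2)) ->
  Rabs (RInt f T z) <= 2 * K / c * exp (- c * z / 2).
Proof.
  intros Hc HK Hz Hf H.
  rewrite <- (opp_RInt_swap f z T Hf). unfold opp; simpl. rewrite Rabs_Ropp.
  eapply Rle_trans.
  { apply (RInt_abs_le f (fun y => K * exp ((- c / 2) * y))); [lra|auto|apply ex_RInt_exp|].
    intros y Hy. replace (- c / 2 * y) with (- c * y / 2) by field. auto. }
  rewrite RInt_exp by lra. pose proof (exp_pos (- c / 2 * T)).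
  replace (- c / 2 * z) with (- c * z / 2) by field.
  replace (K / (- c / 2)) with (- (2 * K / c)) by (field; lra).
  assert (0 <= 2 * K / c) by (apply Rmult_le_pos; [lra|left; apply Rinv_0_lt_compat; lra]).
  nra.
Qed.

(** Forward integrals against the propagator of the [W]-equation: for a rate
    [l <= -c] the weight [e^{l(z-y) - eps(z^2-y^2)/2}] is at most [e^{-c(z-y)}],
    which turns [K e^{-c y/2}] bounds into [(2K/c) e^{-c z/2}] bounds. *)
Lemma propagator_integral_bound (h : R -> R) c K z l eps :
  0 < c -> 0 <= K -> 0 <= z -> l <= - c -> 0 <= eps -> ex_RInt h 0 z ->
  (forall y, 0 <= y <= z -> Rabs (h y) <= exp (- l * y + eps * y ^ 2 / 2) * (K * exp (- c * y / 2))) ->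
  Rabs (exp (l * z - eps * z ^ 2 / 2) * RInt h 0 z) <= 2 * K / c * exp (- c * z / 2).
Proof.
  intros Hc HK Hz Hl He Hh H.
  rewrite <- (RInt_scal h 0 z _ Hh). eapply Rle_trans.
  { apply (RInt_abs_le _ (fun y => (K * exp (- c * z)) * exp ((c / 2) * y)));
      [lra|apply (ex_RInt_scal h 0 z _ Hh)|apply ex_RInt_exp|].
    intros y Hy. unfold scal; simpl; unfold mult; simpl.
    rewrite Rabs_mult, Rabs_right by (apply Rle_ge; left; apply exp_pos).
    eapply Rle_trans; [apply Rmult_le_compat_l; [left; apply exp_pos|apply H; auto]|].
    rewrite <- Rmult_assoc, <- exp_plus.
    replace (K * exp (- c * z) * exp (c / 2 * y)) with (exp (- c * (z - y)) * (K * exp (- c * y / 2))).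
    - apply Rmult_le_compat_r; [apply Rmult_le_pos; auto; left; apply exp_pos|].
      apply exp_le. assert (0 <= z - y) by lra. assert (y ^ 2 <= z ^ 2) by nra. nra.
    - replace (- c * y / 2) with (- (c / 2 * y)) by field.
      replace (- c * (z - y)) with (- c * z + (c / 2 * y + c / 2 * y)) by field.
      rewrite !exp_plus, exp_Ropp. field. apply Rgt_not_eq, exp_pos. }
  rewrite RInt_exp, Rmult_0_r, exp_0 by lra.
  replace (K * exp (- c * z) / (c / 2) * (exp (c / 2 * z) - 1)) with
    (2 * K / c * (exp (- c * z) * exp (c / 2 * z)) - 2 * K / c * exp (- c * z)) by (field; lra).
  rewrite <- exp_plus. replace (- c * z + c / 2 * z) with (- c * z / 2) by field.
  assert (0 <= 2 * K / c * exp (- c * z)).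
  { apply Rmult_le_pos; [|left; apply exp_pos]. apply Rmult_le_pos; [lra|left; apply Rinv_0_lt_compat; lra]. }
  lra.
Qed.

Lemma half_pow_small C : 0 <= C -> forall e, 0 < e -> exists p, C * (/ 2) ^ p < e.
Proof.
  intros HC e He.
  destruct (pow_lt_1_zero (/ 2) ltac:(rewrite Rabs_right; lra) (e / (C + 1))
              ltac:(apply Rdiv_lt_0_compat; lra)) as [N HN].
  exists N. specialize (HN N (le_n N)). rewrite Rabs_right in HN by (apply Rle_ge, pow_le; lra).
  pose proof (pow_le (/2) N ltac:(lra)).
  apply (Rmult_lt_compat_l (C + 1)) in HN; [|lra].
  replace ((C + 1) * (e / (C + 1))) with e in HN by (field; lra). nra.
Qed.

Lemma abs_small_zero x : (forall e, 0 < e -> Rabs x <= e) -> x = 0.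
Proof.
  intros H. destruct (Req_dec x 0) as [E|E]; auto. exfalso.
  pose proof (Rabs_pos_lt x E). specialize (H (Rabs x / 2) ltac:(lra)). lra.
Qed.

Lemma le_of_geometric x a C : 0 <= C -> (forall p, x <= a + C * (/ 2) ^ p) -> x <= a.
Proof.
  intros HC H. apply Rle_plus_epsilon. intros e He.
  destruct (half_pow_small C HC e He) as [p Hp]. specialize (H p). lra.
Qed.

Lemma geometric_limit (u : nat -> R) C : 0 <= C -> (forall p, Rabs (u (S p) - u p) <= C * (/ 2) ^ p) ->
  exists l, Un_cv u l /\ forall p, Rabs (l - u p) <= 2 * C * (/ 2) ^ p.
Proof.
  intros HC H.
  assert (Htele : forall p d, Rabs (u (p + d)%nat - u p) <= 2 * C * (/ 2) ^ p - 2 * C * (/ 2) ^ (p + d)).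
  { intros p d. induction d.
    - rewrite Nat.add_0_r, Rminus_diag, Rabs_R0. lra.
    - replace (p + S d)%nat with (S (p + d)) by lia.
      replace (u (S (p + d)) - u p) with ((u (S (p + d)) - u (p + d)%nat) + (u (p + d)%nat - u p)) by ring.
      eapply Rle_trans; [apply Rabs_triang|]. pose proof (H (p + d)%nat). simpl pow. lra. }
  assert (HB : forall p q, (p <= q)%nat -> Rabs (u q - u p) <= 2 * C * (/ 2) ^ p).
  { intros p q Hpq. pose proof (Htele p (q - p)%nat) as G. replace (p + (q - p))%nat with q in G by lia.
    pose proof (pow_le (/2) q ltac:(lra)). nra. }
  assert (Hc : Cauchy_crit u).
  { intros e He. destruct (half_pow_small (2 * C) ltac:(lra) (e / 2) ltac:(lra)) as [N HN].
    exists N. intros a b Ha Hb. unfold Rdist. replace (u a - u b) with ((u a - u N) - (u b - u N)) by ring.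
    eapply Rle_lt_trans; [apply Rabs_triang|]. rewrite Rabs_Ropp.
    pose proof (HB N a Ha). pose proof (HB N b Hb). lra. }
  destruct (Rcomplete.R_complete u Hc) as [l Hl]. exists l. split; auto.
  intros p. apply Rle_plus_epsilon. intros e He. destruct (Hl e He) as [N HN].
  specialize (HN (max N p) ltac:(lia)). unfold Rdist in HN.
  pose proof (HB p (max N p) ltac:(lia)).
  replace (l - u p) with (- (u (max N p) - l) + (u (max N p) - u p)) by ring.
  eapply Rle_trans; [apply Rabs_triang|]. rewrite Rabs_Ropp. lra.
Qed.

Definition seq_limit (u : nat -> R) : R := epsilon (inhabits 0) (fun l => Un_cv u l).

Lemma seq_limit_geometric (u : nat -> R) C : 0 <= C ->
  (forall p, Rabs (u (S p) - u p) <= C * (/ 2) ^ p) ->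
  forall p, Rabs (seq_limit u - u p) <= 2 * C * (/ 2) ^ p.
Proof.
  intros HC H. destruct (geometric_limit u C HC H) as [l [Hl Hb]].
  replace (seq_limit u) with l; auto.
  exact (UL_sequence _ _ _ Hl (epsilon_spec (inhabits 0) (fun l => Un_cv u l) (ex_intro _ l Hl))).
Qed.

Lemma RInt_eq_of (f : R -> R) a b : ex_RInt f a b -> RInt_eq f a b (RInt f a b).
Proof. intros H. exists (ex_RInt_Reals_0 f a b H). symmetry. apply RInt_Reals. Qed.

Lemma RInt_eq_to (f : R -> R) a b I : RInt_eq f a b I -> ex_RInt f a b /\ RInt f a b = I.
Proof. intros [pr E]. split; [apply ex_RInt_Reals_1; auto|]. rewrite <- E. apply RInt_Reals. Qed.

Section IntegralSystem.
Variables (n k : nat) (Psi : vec n -> vec k -> R -> R -> mat n k)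
  (Lam Ups : vec n -> vec k -> R -> R -> mat k k)
  (Ubar : vec n) (lb : Fin.t k -> R) (c eps T delta : R) (Ue : vec n) (Wbar : vec k)
  (rho Lc Bp A0 B0 : R).
Hypothesis Hc : 0 < c.
Hypothesis Hlb : forall i, lb i <= - c.
Hypothesis Heps : 0 < eps.
Hypothesis HT : eps * T = delta.
Hypothesis Hed : eps <= delta.
Hypothesis HA0 : 0 <= A0.
Hypothesis HB0 : 0 <= B0.
Hypothesis Hreg : A0 + B0 + 2 * delta <= rho.
Hypothesis HLc : 0 <= Lc.
Hypothesis HBp : 0 <= Bp.

Definition near_base V W a b := dist4 V W a b Ubar (vzero k) 0 0 <= rho.

Hypothesis HPsiL : lipschitz_near Ubar rho Lc Psi.
Hypothesis HLamL : lipschitz_near Ubar rho Lc Lam.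
Hypothesis HUpsL : lipschitz_near Ubar rho Lc Ups.
Hypothesis HPsiB : forall i j V W a b, near_base V W a b -> Rabs (Psi V W a b i j) <= Bp.
Hypothesis HLam0 : Lam Ubar (vzero k) 0 0 = mdiag lb.
Hypothesis HUps0 : Ups Ubar (vzero k) 0 0 = mid k.

Lemma T_pos : 0 < T.
Proof. nra. Qed.

(** Functions on [[0,T]] are evaluated at clamped times, so that all
    integrands are defined, and continuous, on the whole line. *)
Let ct y := clamp T y.

Lemma ct_in y : 0 <= ct y <= T.
Proof. apply clamp_in. pose proof T_pos. lra. Qed.

Lemma decay_le_1 y : 0 <= y -> exp (- c * y / 2) <= 1.
Proof. intros. rewrite <- exp_0. apply exp_le. nra. Qed.

Definition rhsV (V : R -> vec n) (W : R -> vec k) i y :=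
  mv (Psi (V (ct y)) (W (ct y)) (eps * ct y) eps) (W (ct y)) i.

Definition pertW (V : R -> vec n) (W : R -> vec k) y : mat k k :=
  msub (msub (Lam (V (ct y)) (W (ct y)) (eps * ct y) eps) (mdiag lb))
       (mscal (eps * ct y) (msub (Ups (V (ct y)) (W (ct y)) (eps * ct y) eps) (mid k))).

Definition rhsW (V : R -> vec n) (W : R -> vec k) i y := mv (pertW V W y) (W (ct y)) i.

(** [prop i z = e^{lb_i z - eps z^2/2}] is the diagonal propagator of the linear
    [W]-equation; the Duhamel integrand [rhsW] is weighted by its inverse. *)
Definition prop i z := exp (lb i * z - eps * z ^ 2 / 2).

Definition rhsW_weighted (V : R -> vec n) (W : R -> vec k) i y :=
  exp (- lb i * y + eps * y ^ 2 / 2) * rhsW V W i y.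

Definition PhiV (V : R -> vec n) (W : R -> vec k) z : vec n :=
  fun i => Ue i + RInt (rhsV V W i) T z.

Definition PhiW (V : R -> vec n) (W : R -> vec k) z : vec k :=
  fun i => prop i z * (Wbar i + RInt (rhsW_weighted V W i) 0 z).

Definition bounded (V : R -> vec n) (W : R -> vec k) a b := forall y, 0 <= y <= T ->
  norm1 (vsub (V y) Ubar) <= a /\ norm1 (W y) <= b * exp (- c * y / 2).

(** Entry bound for [pertW] on the region. *)
Definition muW := (1 + delta) * Lc * (A0 + B0 + 2 * delta).

Lemma muW_nonneg : 0 <= muW.
Proof. unfold muW. apply Rmult_le_pos; [apply Rmult_le_pos; lra|lra]. Qed.

Lemma bounded_weaken V W a b a' b' : bounded V W a b -> a <= a' -> b <= b' -> bounded V W a' b'.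
Proof. intros H Ha Hb y Hy. destruct (H y Hy). pose proof (exp_pos (- c * y / 2)). split; [lra|nra]. Qed.

Lemma base_near_base : near_base Ubar (vzero k) 0 0.
Proof. unfold near_base. rewrite dist4_diag. pose proof T_pos. nra. Qed.

Lemma bounded_at V W a b y : bounded V W a b -> a <= A0 -> b <= B0 -> 0 <= b ->
  dist4 (V (ct y)) (W (ct y)) (eps * ct y) eps Ubar (vzero k) 0 0 <= A0 + B0 + 2 * delta /\
  norm1 (W (ct y)) <= b * exp (- c * ct y / 2).
Proof.
  intros H Ha Hb Hb0. pose proof (ct_in y) as Hy. destruct (H _ Hy) as [H1 H2]. split; auto.
  pose proof (decay_le_1 (ct y) ltac:(lra)). pose proof (exp_pos (- c * ct y / 2)).
  unfold dist4. rewrite norm1_sub_zero, !Rminus_0_r, !Rabs_right by nra. nra.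
Qed.

Lemma bounded_near_base V W a b y : bounded V W a b -> a <= A0 -> b <= B0 -> 0 <= b ->
  near_base (V (ct y)) (W (ct y)) (eps * ct y) eps.
Proof. intros. unfold near_base. pose proof (bounded_at V W a b y). intuition lra. Qed.

Lemma pertW_bound V W a b y i j : bounded V W a b -> a <= A0 -> b <= B0 -> 0 <= b ->
  Rabs (pertW V W y i j) <= muW.
Proof.
  intros H Ha Hb Hb0. destruct (bounded_at V W a b y H Ha Hb Hb0) as [HD _].
  pose proof (bounded_near_base V W a b y H Ha Hb Hb0) as Hr.
  pose proof (HLamL i j _ _ _ _ _ _ _ _ base_near_base Hr) as L1.
  pose proof (HUpsL i j _ _ _ _ _ _ _ _ base_near_base Hr) as L2.
  rewrite HLam0 in L1. rewrite HUps0 in L2. pose proof (ct_in y).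
  unfold pertW, msub, mscal. set (D := dist4 (V (ct y)) (W (ct y)) (eps * ct y) eps Ubar (vzero k) 0 0) in *.
  assert (0 <= eps * ct y <= delta) by (split; nra).
  pose proof (dist4_nonneg _ _ (V (ct y)) (W (ct y)) (eps * ct y) eps Ubar (vzero k) 0 0).
  eapply Rle_trans; [apply Rabs_triang|]. rewrite Rabs_Ropp, Rabs_mult, (Rabs_right (eps * ct y)) by lra.
  unfold muW. assert (Lc * D <= Lc * (A0 + B0 + 2 * delta)) by (apply Rmult_le_compat_l; auto).
  assert (eps * ct y * Rabs (Ups (V (ct y)) (W (ct y)) (eps * ct y) eps i j - mid k i j) <= delta * (Lc * D)).
  { apply Rmult_le_compat; auto; try lra. apply Rabs_pos. }
  nra.
Qed.

Lemma rhsV_bound V W a b i y : bounded V W a b -> a <= A0 -> b <= B0 -> 0 <= b ->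
  Rabs (rhsV V W i y) <= Bp * (b * exp (- c * ct y / 2)).
Proof.
  intros H Ha Hb Hb0. destruct (bounded_at V W a b y H Ha Hb Hb0) as [_ Hw].
  unfold rhsV. eapply Rle_trans; [apply mv_bound|].
  - intros j; apply HPsiB, (bounded_near_base V W a b); auto.
  - apply Rmult_le_compat_l; auto.
Qed.

Lemma rhsW_bound V W a b i y : bounded V W a b -> a <= A0 -> b <= B0 -> 0 <= b ->
  Rabs (rhsW V W i y) <= muW * (b * exp (- c * ct y / 2)).
Proof.
  intros H Ha Hb Hb0. destruct (bounded_at V W a b y H Ha Hb Hb0) as [_ Hw].
  unfold rhsW. eapply Rle_trans; [apply mv_bound|].
  - intros j; apply (pertW_bound V W a b); auto.
  - apply Rmult_le_compat_l; auto. apply muW_nonneg.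
Qed.

Lemma dist4_same_time (V V' : R -> vec n) (W W' : R -> vec k) y dv dw :
  norm1 (vsub (V (ct y)) (V' (ct y))) <= dv -> norm1 (vsub (W (ct y)) (W' (ct y))) <= dw ->
  dist4 (V' (ct y)) (W' (ct y)) (eps * ct y) eps (V (ct y)) (W (ct y)) (eps * ct y) eps <= dv + dw.
Proof.
  intros Hv Hw. unfold dist4. rewrite !Rminus_diag, Rabs_R0.
  rewrite (norm1_sub_sym _ (V' _)), (norm1_sub_sym _ (W' _)). lra.
Qed.

Lemma rhsV_lipschitz V W V' W' i y dv dw : bounded V W A0 B0 -> bounded V' W' A0 B0 ->
  norm1 (vsub (V (ct y)) (V' (ct y))) <= dv -> norm1 (vsub (W (ct y)) (W' (ct y))) <= dw ->
  Rabs (rhsV V W i y - rhsV V' W' i y) <= Bp * dw + Lc * (dv + dw) * (B0 * exp (- c * ct y / 2)).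
Proof.
  intros H H' Hv Hw.
  pose proof (bounded_near_base V W A0 B0 y H ltac:(lra) ltac:(lra) HB0) as Hr.
  pose proof (bounded_near_base V' W' A0 B0 y H' ltac:(lra) ltac:(lra) HB0) as Hr'.
  destruct (bounded_at V' W' A0 B0 y H') as [_ Hw']; try lra.
  pose proof (norm1_nonneg _ (vsub (V (ct y)) (V' (ct y)))). pose proof (norm1_nonneg _ (vsub (W (ct y)) (W' (ct y)))).
  unfold rhsV. eapply Rle_trans; [apply (mv_diff _ _ _ _ _ _ i Bp (Lc * (dv + dw)))|].
  - intros j; apply HPsiB, Hr.
  - intros j. rewrite <- Rabs_Ropp, Ropp_minus_distr.
    eapply Rle_trans; [apply HPsiL; [apply Hr|apply Hr']|].
    apply Rmult_le_compat_l; auto. apply dist4_same_time; auto.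
  - apply Rplus_le_compat; apply Rmult_le_compat_l; auto. apply Rmult_le_pos; auto. lra.
Qed.

Lemma rhsW_lipschitz V W V' W' i y dv dw : bounded V W A0 B0 -> bounded V' W' A0 B0 ->
  norm1 (vsub (V (ct y)) (V' (ct y))) <= dv -> norm1 (vsub (W (ct y)) (W' (ct y))) <= dw ->
  Rabs (rhsW V W i y - rhsW V' W' i y) <= muW * dw + (1 + delta) * Lc * (dv + dw) * (B0 * exp (- c * ct y / 2)).
Proof.
  intros H H' Hv Hw.
  pose proof (bounded_near_base V W A0 B0 y H ltac:(lra) ltac:(lra) HB0) as Hr.
  pose proof (bounded_near_base V' W' A0 B0 y H' ltac:(lra) ltac:(lra) HB0) as Hr'.
  destruct (bounded_at V' W' A0 B0 y H') as [_ Hw']; try lra.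
  pose proof (norm1_nonneg _ (vsub (V (ct y)) (V' (ct y)))). pose proof (norm1_nonneg _ (vsub (W (ct y)) (W' (ct y)))).
  pose proof (dist4_same_time V V' W W' y dv dw Hv Hw) as Hd. pose proof (ct_in y).
  assert (0 <= eps * ct y <= delta) by (split; nra).
  unfold rhsW. eapply Rle_trans; [apply (mv_diff _ _ _ _ _ _ i muW ((1 + delta) * Lc * (dv + dw)))|].
  - intros j; apply (pertW_bound V W A0 B0); auto; lra.
  - intros j. unfold pertW, msub, mscal.
    pose proof (HLamL i j _ _ _ _ _ _ _ _ Hr Hr') as L1.
    pose proof (HUpsL i j _ _ _ _ _ _ _ _ Hr Hr') as L2.
    set (l := Lam (V (ct y)) (W (ct y)) (eps * ct y) eps i j) in *.
    set (l' := Lam (V' (ct y)) (W' (ct y)) (eps * ct y) eps i j) in *.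
    set (u := Ups (V (ct y)) (W (ct y)) (eps * ct y) eps i j) in *.
    set (u' := Ups (V' (ct y)) (W' (ct y)) (eps * ct y) eps i j) in *.
    replace (l - mdiag lb i j - eps * ct y * (u - mid k i j) - (l' - mdiag lb i j - eps * ct y * (u' - mid k i j)))
      with (- (l' - l) + eps * ct y * (u' - u)) by ring.
    eapply Rle_trans; [apply Rabs_triang|]. rewrite Rabs_Ropp, Rabs_mult, (Rabs_right (eps * ct y)) by lra.
    assert (Lc * dist4 (V' (ct y)) (W' (ct y)) (eps * ct y) eps (V (ct y)) (W (ct y)) (eps * ct y) eps <= Lc * (dv + dw))
      by (apply Rmult_le_compat_l; auto).
    assert (eps * ct y * Rabs (u' - u) <= delta * (Lc * (dv + dw))) by (apply Rmult_le_compat; try lra; apply Rabs_pos).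
    assert (0 <= Lc * (dv + dw)) by (apply Rmult_le_pos; lra). nra.
  - apply Rplus_le_compat; apply Rmult_le_compat_l; auto; [apply muW_nonneg|].
    apply Rmult_le_pos; [apply Rmult_le_pos; lra|lra].
Qed.

Lemma cont_coef P Q (F : vec n -> vec k -> R -> R -> mat P Q) V W a b :
  lipschitz_near Ubar rho Lc F -> bounded V W a b -> a <= A0 -> b <= B0 -> 0 <= b ->
  (forall j x, continuous (fun t => V (ct t) j) x) -> (forall j x, continuous (fun t => W (ct t) j) x) ->
  forall i j y, continuous (fun t => F (V (ct t)) (W (ct t)) (eps * ct t) eps i j) y.
Proof.
  intros HF H Ha Hb Hb0 CV CW i j y.
  apply (cont_dominated _ (fun t => Lc * dist4 (V (ct t)) (W (ct t)) (eps * ct t) eps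
                                             (V (ct y)) (W (ct y)) (eps * ct y) eps)).
  - intros t. apply HF; apply (bounded_near_base V W a b); auto.
  - apply cont_mult; [apply continuous_const|]. unfold dist4, norm1, vsub.
    apply cont_plus; [apply cont_plus; [apply cont_plus|]|].
    + apply (cont_fsum n (fun j t => Rabs (V (ct t) j - V (ct y) j))). intros l.
      apply continuous_Rabs_comp, cont_minus; [apply CV|apply continuous_const].
    + apply (cont_fsum k (fun j t => Rabs (W (ct t) j - W (ct y) j))). intros l.
      apply continuous_Rabs_comp, cont_minus; [apply CW|apply continuous_const].
    + apply continuous_Rabs_comp, cont_minus; [|apply continuous_const].
      apply cont_mult; [apply continuous_const|apply cont_clamp; pose proof T_pos; lra].
    + apply continuous_const.
  - rewrite dist4_diag. ring.
Qed.

Lemma cont_rhsV V W a b : bounded V W a b -> a <= A0 -> b <= B0 -> 0 <= b ->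
  (forall j x, continuous (fun t => V (ct t) j) x) -> (forall j x, continuous (fun t => W (ct t) j) x) ->
  forall i y, continuous (rhsV V W i) y.
Proof.
  intros H Ha Hb Hb0 CV CW i y. unfold rhsV, mv.
  apply (cont_fsum k (fun j t => Psi (V (ct t)) (W (ct t)) (eps * ct t) eps i j * W (ct t) j)).
  intros j. apply cont_mult; auto. apply (cont_coef n k Psi V W a b); auto.
Qed.

Lemma cont_rhsW_weighted V W a b : bounded V W a b -> a <= A0 -> b <= B0 -> 0 <= b ->
  (forall j x, continuous (fun t => V (ct t) j) x) -> (forall j x, continuous (fun t => W (ct t) j) x) ->
  forall i y, continuous (rhsW_weighted V W i) y.
Proof.
  intros H Ha Hb Hb0 CV CW i y. unfold rhsW_weighted. apply cont_mult.
  - apply (@ex_derive_continuous R_AbsRing R_NormedModule). auto_derive. exact I.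
  - unfold rhsW, mv. apply (cont_fsum k (fun j t => pertW V W t i j * W (ct t) j)).
    intros j. apply cont_mult; auto. unfold pertW, msub, mscal.
    apply cont_minus; [apply cont_minus; [|apply continuous_const]|apply cont_mult].
    + apply (cont_coef k k Lam V W a b); auto.
    + apply cont_mult; [apply continuous_const|apply cont_clamp; pose proof T_pos; lra].
    + apply cont_minus; [|apply continuous_const]. apply (cont_coef k k Ups V W a b); auto.
Qed.

Lemma prop_le i z : 0 <= z -> prop i z <= exp (- c * z / 2).
Proof.
  intros Hz. apply exp_le. pose proof (Hlb i).
  assert (0 <= eps * z ^ 2) by (apply Rmult_le_pos; [lra|apply pow2_ge_0]). nra.
Qed.

Lemma Phi_bounded V W a b : bounded V W a b -> 0 <= a <= A0 -> 0 <= b <= B0 ->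
  (forall i z, 0 <= z <= T -> ex_RInt (rhsV V W i) z T) ->
  (forall i z, 0 <= z <= T -> ex_RInt (rhsW_weighted V W i) 0 z) ->
  bounded (PhiV V W) (PhiW V W)
    (norm1 (vsub Ue Ubar) + INR n * (2 * (Bp * b) / c)) (norm1 Wbar + INR k * (2 * (muW * b) / c)).
Proof.
  intros H Ha Hb HexV HexW z Hz.
  assert (HK1 : 0 <= 2 * (Bp * b) / c) by (apply Rmult_le_pos; [nra|left; apply Rinv_0_lt_compat; lra]).
  assert (HK2 : 0 <= 2 * (muW * b) / c).
  { pose proof muW_nonneg. apply Rmult_le_pos; [nra|left; apply Rinv_0_lt_compat; lra]. }
  pose proof (decay_le_1 z ltac:(lra)). pose proof (exp_pos (- c * z / 2)).
  split.
  - apply Rle_trans with (fsum n (fun i => Rabs (Ue i - Ubar i) + 2 * (Bp * b) / c));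
      [|rewrite fsum_plus, fsum_const; unfold norm1, vsub; lra].
    apply fsum_le; intros i. unfold vsub, PhiV.
    replace (Ue i + RInt (rhsV V W i) T z - Ubar i) with ((Ue i - Ubar i) + RInt (rhsV V W i) T z) by ring.
    eapply Rle_trans; [apply Rabs_triang|]. apply Rplus_le_compat_l.
    eapply Rle_trans; [apply (tail_integral_bound _ c (Bp * b) z T); auto; try nra|nra].
    intros y Hy. rewrite <- (clamp_id T y) at 2 by lra. rewrite Rmult_assoc.
    apply (rhsV_bound V W a b); auto; lra.
  - apply Rle_trans with (fsum k (fun i => (Rabs (Wbar i) + 2 * (muW * b) / c) * exp (- c * z / 2))).
    + apply fsum_le; intros i. unfold PhiW. rewrite Rmult_plus_distr_l, Rmult_plus_distr_r.
      eapply Rle_trans; [apply Rabs_triang|]. apply Rplus_le_compat.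
      * rewrite Rabs_mult, Rabs_right by (left; apply exp_pos). rewrite Rmult_comm.
        apply Rmult_le_compat_l; [apply Rabs_pos|]. apply prop_le; lra.
      * apply (propagator_integral_bound _ c (muW * b) z (lb i) eps); auto; try lra.
        { pose proof muW_nonneg. nra. }
        intros y Hy. unfold rhsW_weighted. rewrite Rabs_mult, Rabs_right by (left; apply exp_pos).
        apply Rmult_le_compat_l; [left; apply exp_pos|]. rewrite <- (clamp_id T y) at 2 by lra.
        rewrite Rmult_assoc. apply (rhsW_bound V W a b); auto; lra.
    + rewrite (fsum_ext _ _ (fun i => exp (- c * z / 2) * (Rabs (Wbar i) + 2 * (muW * b) / c))) by (intros; ring).
      rewrite fsum_scal, fsum_plus, fsum_const. unfold norm1. lra.
Qed.

Definition integrable_rhs (V : R -> vec n) (W : R -> vec k) :=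
  (forall i z, 0 <= z <= T -> ex_RInt (rhsV V W i) z T) /\
  (forall i z, 0 <= z <= T -> ex_RInt (rhsW_weighted V W i) 0 z).

Definition close (lam s : R) (V : R -> vec n) (W : R -> vec k) V' W' := forall y, 0 <= y <= T ->
  norm1 (vsub (V y) (V' y)) <= s /\ norm1 (vsub (W y) (W' y)) <= s / lam * exp (- c * y / 2).

Lemma close_sym lam s V W V' W' : close lam s V W V' W' -> close lam s V' W' V W.
Proof. intros H y Hy. rewrite norm1_sub_sym, (norm1_sub_sym _ (W' y)). auto. Qed.

Lemma close_triangle lam s1 s2 V1 W1 V2 W2 V3 W3 :
  close lam s1 V1 W1 V2 W2 -> close lam s2 V2 W2 V3 W3 -> close lam (s1 + s2) V1 W1 V3 W3.
Proof.
  intros H1 H2 y Hy. destruct (H1 y Hy), (H2 y Hy).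
  pose proof (norm1_triangle _ (V1 y) (V2 y) (V3 y)). pose proof (norm1_triangle _ (W1 y) (W2 y) (W3 y)).
  split; [lra|]. unfold Rdiv in *. lra.
Qed.

Lemma close_clamped lam s V W V' W' y : close lam s V W V' W' -> 0 <= y <= T ->
  norm1 (vsub (V (ct y)) (V' (ct y))) <= s /\
  norm1 (vsub (W (ct y)) (W' (ct y))) <= s / lam * exp (- c * ct y / 2) /\
  0 < exp (- c * y / 2) <= 1 /\ ct y = y.
Proof.
  intros Hd Hy. unfold ct. rewrite clamp_id by lra.
  pose proof (decay_le_1 y ltac:(lra)). pose proof (exp_pos (- c * y / 2)).
  destruct (Hd y Hy). repeat split; auto; lra.
Qed.

Lemma PhiV_difference V W V' W' s lam : bounded V W A0 B0 -> bounded V' W' A0 B0 -> 0 <= s -> 1 <= lam ->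
  close lam s V W V' W' -> integrable_rhs V W -> integrable_rhs V' W' -> forall z, 0 <= z <= T ->
  norm1 (vsub (PhiV V W z) (PhiV V' W' z)) <= INR n * (2 * ((Bp / lam + Lc * (1 + 1 / lam) * B0) * s) / c).
Proof.
  intros H H' Hs Hlam Hd [HV _] [HV' _] z Hz.
  set (KV := (Bp / lam + Lc * (1 + 1 / lam) * B0) * s).
  assert (HKV : 0 <= KV).
  { assert (0 < / lam) by (apply Rinv_0_lt_compat; lra).
    unfold KV, Rdiv. apply Rmult_le_pos; auto. apply Rplus_le_le_0_compat; repeat apply Rmult_le_pos; lra. }
  unfold norm1 at 1. rewrite <- (Rmult_1_r (2 * KV / c)), <- fsum_const. apply fsum_le; intros i.
  unfold vsub, PhiV. replace (Ue i + RInt (rhsV V W i) T z - (Ue i + RInt (rhsV V' W' i) T z)) with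
    (RInt (rhsV V W i) T z - RInt (rhsV V' W' i) T z) by ring.
  assert (E : RInt (rhsV V W i) T z - RInt (rhsV V' W' i) T z = RInt (fun y => rhsV V W i y - rhsV V' W' i y) T z)
    by (symmetry; apply (RInt_minus (rhsV V W i) (rhsV V' W' i) T z); apply ex_RInt_swap; auto).
  rewrite E. eapply Rle_trans; [apply (tail_integral_bound _ c KV z T); auto|].
  - apply (ex_RInt_minus (rhsV V W i) (rhsV V' W' i) z T); auto.
  - intros y Hy. destruct (close_clamped lam s V W V' W' y Hd ltac:(lra)) as [D1 [D2 [D3 D4]]].
    eapply Rle_trans; [apply (rhsV_lipschitz V W V' W' i y s (s / lam * exp (- c * ct y / 2))); auto|].
    rewrite D4. unfold KV. apply lipschitz_bound_weighted; lra.
  - rewrite Rmult_1_r. refine (proj2 (scale_le_1 _ _ _ _));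
      [unfold Rdiv; apply Rmult_le_pos; [lra|left; apply Rinv_0_lt_compat; lra]|split; [apply exp_pos|apply decay_le_1; lra]].
Qed.

Lemma PhiW_difference V W V' W' s lam : bounded V W A0 B0 -> bounded V' W' A0 B0 -> 0 <= s -> 1 <= lam ->
  close lam s V W V' W' -> integrable_rhs V W -> integrable_rhs V' W' -> forall z, 0 <= z <= T ->
  norm1 (vsub (PhiW V W z) (PhiW V' W' z))
    <= INR k * (2 * ((muW / lam + (1 + delta) * Lc * (1 + 1 / lam) * B0) * s) / c) * exp (- c * z / 2).
Proof.
  intros H H' Hs Hlam Hd [_ HW] [_ HW'] z Hz. pose proof muW_nonneg.
  set (KW := (muW / lam + (1 + delta) * Lc * (1 + 1 / lam) * B0) * s).
  assert (HKW : 0 <= KW).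
  { assert (0 < / lam) by (apply Rinv_0_lt_compat; lra).
    unfold KW, Rdiv. apply Rmult_le_pos; auto. apply Rplus_le_le_0_compat; repeat apply Rmult_le_pos; lra. }
  unfold norm1 at 1. rewrite Rmult_assoc, <- fsum_const. apply fsum_le; intros i.
  unfold vsub, PhiW. replace (prop i z * (Wbar i + RInt (rhsW_weighted V W i) 0 z) -
                             prop i z * (Wbar i + RInt (rhsW_weighted V' W' i) 0 z)) with
    (prop i z * (RInt (rhsW_weighted V W i) 0 z - RInt (rhsW_weighted V' W' i) 0 z)) by ring.
  assert (E : RInt (rhsW_weighted V W i) 0 z - RInt (rhsW_weighted V' W' i) 0 z
              = RInt (fun y => rhsW_weighted V W i y - rhsW_weighted V' W' i y) 0 z)
    by (symmetry; apply (RInt_minus (rhsW_weighted V W i) (rhsW_weighted V' W' i) 0 z); auto).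
  rewrite E. apply (propagator_integral_bound _ c KW z (lb i) eps); auto; try lra.
  - apply (ex_RInt_minus (rhsW_weighted V W i) (rhsW_weighted V' W' i) 0 z); auto.
  - intros y Hy. unfold rhsW_weighted. rewrite <- Rmult_minus_distr_l.
    rewrite Rabs_mult, Rabs_right by (left; apply exp_pos).
    apply Rmult_le_compat_l; [left; apply exp_pos|].
    destruct (close_clamped lam s V W V' W' y Hd ltac:(lra)) as [D1 [D2 [D3 D4]]].
    eapply Rle_trans; [apply (rhsW_lipschitz V W V' W' i y s (s / lam * exp (- c * ct y / 2))); auto|].
    rewrite D4. unfold KW. apply lipschitz_bound_weighted; try lra. apply Rmult_le_pos; lra.
Qed.

(** The smallness conditions below (the radii [aS], [bS] of the
    invariant class and a weight [lam >= 1] for which both contraction factors are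
    at most [1/2]) make the operator a contraction of the admissible class. *)

Variables (aS bS lam : R).
Hypothesis HaS : 0 <= aS <= A0.
Hypothesis HbS : 0 <= bS <= B0.
Hypothesis Hlam : 1 <= lam.
Hypothesis Hinv1 : norm1 (vsub Ue Ubar) + INR n * (2 * (Bp * bS) / c) <= aS.
Hypothesis Hinv2 : norm1 Wbar + INR k * (2 * (muW * bS) / c) <= bS.
Hypothesis Hk1 : INR n * (2 * (Bp / lam + Lc * (1 + 1 / lam) * B0) / c) <= 1 / 2.
Hypothesis Hk2 : INR k * (2 * (muW / lam + (1 + delta) * Lc * (1 + 1 / lam) * B0) / c) <= 1 / (2 * lam).

Lemma lam_inv : 0 < / lam <= 1.
Proof. split; [apply Rinv_0_lt_compat; lra|]. rewrite <- Rinv_1. apply Rinv_le_contravar; lra. Qed.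

Definition regular V W := bounded V W A0 B0 /\ integrable_rhs V W.

Definition admissible (V : R -> vec n) (W : R -> vec k) := bounded V W aS bS /\
  (forall j x, continuous (fun t => V (ct t) j) x) /\ (forall j x, continuous (fun t => W (ct t) j) x).

Definition fixed_point (V : R -> vec n) (W : R -> vec k) := forall z, 0 <= z <= T ->
  (forall i, V z i = PhiV V W z i) /\ (forall j, W z j = PhiW V W z j).

Lemma admissible_integrable V W : admissible V W -> integrable_rhs V W.
Proof.
  intros [H [CV CW]]. split; intros i a b; apply ex_RInt_cont; intros.
  - apply (cont_rhsV V W aS bS); auto; lra.
  - apply (cont_rhsW_weighted V W aS bS); auto; lra.
Qed.

Lemma admissible_regular V W : admissible V W -> regular V W.
Proof.
  intros HG. split; [|apply admissible_integrable; auto].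
  destruct HG as [H _]. apply (bounded_weaken V W aS bS); auto; lra.
Qed.

Lemma Phi_admissible V W : admissible V W -> admissible (PhiV V W) (PhiW V W).
Proof.
  intros HG. pose proof (admissible_integrable V W HG) as [E1 E2]. destruct HG as [H [CV CW]].
  pose proof T_pos. split; [|split].
  - eapply bounded_weaken; [apply (Phi_bounded V W aS bS)|apply Hinv1|apply Hinv2]; auto.
  - intros j x. unfold PhiV. apply (continuous_comp ct (fun z => Ue j + RInt (rhsV V W j) T z));
      [apply cont_clamp; lra|].
    apply cont_plus; [apply continuous_const|]. apply cont_RInt. intros; apply (cont_rhsV V W aS bS); auto; lra.
  - intros j x. unfold PhiW.
    apply (continuous_comp ct (fun z => prop j z * (Wbar j + RInt (rhsW_weighted V W j) 0 z)));
      [apply cont_clamp; lra|].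
    apply cont_mult.
    + unfold prop. apply (@ex_derive_continuous R_AbsRing R_NormedModule). auto_derive. exact I.
    + apply cont_plus; [apply continuous_const|]. apply cont_RInt.
      intros; apply (cont_rhsW_weighted V W aS bS); auto; lra.
Qed.

Lemma Phi_contraction V W V' W' s : regular V W -> regular V' W' -> 0 <= s ->
  close lam s V W V' W' -> close lam (s / 2) (PhiV V W) (PhiW V W) (PhiV V' W') (PhiW V' W').
Proof.
  intros [H HI] [H' HI'] Hs Hd z Hz.
  pose proof (PhiV_difference V W V' W' s lam H H' Hs Hlam Hd HI HI' z Hz) as C1.
  pose proof (PhiW_difference V W V' W' s lam H H' Hs Hlam Hd HI HI' z Hz) as C2.
  pose proof lam_inv. pose proof (exp_pos (- c * z / 2)). split.
  - replace (INR n * (2 * ((Bp / lam + Lc * (1 + 1 / lam) * B0) * s) / c))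
      with (INR n * (2 * (Bp / lam + Lc * (1 + 1 / lam) * B0) / c) * s) in C1 by (field; lra).
    assert (INR n * (2 * (Bp / lam + Lc * (1 + 1 / lam) * B0) / c) * s <= 1 / 2 * s)
      by (apply Rmult_le_compat_r; auto). lra.
  - replace (INR k * (2 * ((muW / lam + (1 + delta) * Lc * (1 + 1 / lam) * B0) * s) / c))
      with (INR k * (2 * (muW / lam + (1 + delta) * Lc * (1 + 1 / lam) * B0) / c) * s) in C2 by (field; lra).
    assert (INR k * (2 * (muW / lam + (1 + delta) * Lc * (1 + 1 / lam) * B0) / c) * s <= 1 / (2 * lam) * s)
      by (apply Rmult_le_compat_r; auto).
    replace (s / 2 / lam) with (1 / (2 * lam) * s) by (field; lra). nra.
Qed.

Lemma close_geometric_eq C V W V' W' : 0 <= C -> (forall p, close lam (C * (/ 2) ^ p) V W V' W') ->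
  forall z, 0 <= z <= T -> (forall i, V z i = V' z i) /\ (forall j, W z j = W' z j).
Proof.
  intros HC H z Hz. pose proof lam_inv as Hl. pose proof (decay_le_1 z ltac:(lra)) as He1.
  pose proof (exp_pos (- c * z / 2)) as He0.
  split; intros i; apply Rminus_diag_uniq, abs_small_zero; intros e He;
    destruct (half_pow_small C HC e He) as [p Hp]; destruct (H p z Hz) as [Hv Hw];
    pose proof (pow_le (/ 2) p ltac:(lra)) as Hq.
  - pose proof (abs_le_norm1 _ (vsub (V z) (V' z)) i) as Hi. unfold vsub at 1 in Hi. lra.
  - pose proof (abs_le_norm1 _ (vsub (W z) (W' z)) i) as Hi. unfold vsub at 1 in Hi.
    assert (C * (/ 2) ^ p / lam * exp (- c * z / 2) <= C * (/ 2) ^ p).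
    { unfold Rdiv. rewrite Rmult_assoc.
      refine (proj2 (scale_le_1 _ _ _ _)); [apply Rmult_le_pos; lra|split; [apply Rmult_lt_0_compat|]; nra]. }
    lra.
Qed.

Lemma fixed_point_unique V W V' W' : regular V W -> regular V' W' ->
  fixed_point V W -> fixed_point V' W' ->
  forall z, 0 <= z <= T -> (forall i, V' z i = V z i) /\ (forall j, W' z j = W z j).
Proof.
  intros HR HR' F F'.
  set (s := 2 * A0 + 2 * lam * B0).
  assert (Hs : 0 <= s) by (unfold s; nra).
  assert (Hclose : forall p, close lam (s * (/ 2) ^ p) V' W' V W).
  { induction p; intros y Hy.
    - destruct HR as [H _], HR' as [H' _]. destruct (H y Hy) as [H1 H2], (H' y Hy) as [H1' H2'].
      pose proof (norm1_triangle _ (V' y) Ubar (V y)). pose proof (norm1_triangle _ (W' y) (vzero k) (W y)).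
      rewrite (norm1_sub_sym _ Ubar), (norm1_sub_sym _ (vzero k)), !norm1_sub_zero in *.
      pose proof lam_inv. pose proof (exp_pos (- c * y / 2)). simpl. rewrite Rmult_1_r. split.
      + unfold s. nra.
      + replace (s / lam) with (2 * A0 / lam + 2 * B0) by (unfold s; field; lra).
        assert (0 <= 2 * A0 / lam) by (unfold Rdiv; apply Rmult_le_pos; lra). nra.
    - replace (s * (/ 2) ^ S p) with (s * (/ 2) ^ p / 2) by (simpl; field).
      assert (Hsp : 0 <= s * (/ 2) ^ p) by (apply Rmult_le_pos; [lra|apply pow_le; lra]).
      destruct (Phi_contraction V' W' V W _ HR' HR Hsp IHp y Hy) as [C1 C2].
      destruct (F y Hy) as [FV FW], (F' y Hy) as [FV' FW'].
      unfold norm1, vsub in *.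
      rewrite (fsum_ext _ (fun i => Rabs (V' y i - V y i)) (fun i => Rabs (PhiV V' W' y i - PhiV V W y i)))
        by (intros i; rewrite FV, FV'; auto).
      rewrite (fsum_ext _ (fun i => Rabs (W' y i - W y i)) (fun i => Rabs (PhiW V' W' y i - PhiW V W y i)))
        by (intros i; rewrite FW, FW'; auto).
      auto. }
  exact (close_geometric_eq s V' W' V W Hs Hclose).
Qed.

Fixpoint picard (p : nat) : (R -> vec n) * (R -> vec k) :=
  match p with
  | O => (fun _ => Ubar, fun _ => vzero k)
  | S p' => (PhiV (fst (picard p')) (snd (picard p')), PhiW (fst (picard p')) (snd (picard p')))
  end.

Lemma picard_admissible p : admissible (fst (picard p)) (snd (picard p)).
Proof.
  induction p; [|apply Phi_admissible; auto].
  simpl. split; [|split; intros; apply continuous_const].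
  intros y Hy. rewrite norm1_sub_diag. unfold norm1, vzero. rewrite fsum_zero by (intros; apply Rabs_R0).
  pose proof (exp_pos (- c * y / 2)). split; nra.
Qed.

(** Initial distance of the iteration. *)
Definition s0 := aS + lam * bS.

Lemma s0_nonneg : 0 <= s0.
Proof. unfold s0. nra. Qed.

Lemma picard_step p : close lam (s0 * (/ 2) ^ p) (fst (picard (S p))) (snd (picard (S p)))
                                            (fst (picard p)) (snd (picard p)).
Proof.
  induction p.
  - intros y Hy. destruct (picard_admissible 1) as [H _]. destruct (H y Hy) as [H1 H2].
    simpl in H1, H2 |- *. rewrite norm1_sub_zero, Rmult_1_r. unfold s0. split; [nra|].
    pose proof (exp_pos (- c * y / 2)).
    replace ((aS + lam * bS) / lam) with (aS / lam + bS) by (field; lra).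
    assert (0 <= aS / lam) by (unfold Rdiv; apply Rmult_le_pos; [lra|left; apply Rinv_0_lt_compat; lra]). nra.
  - replace (s0 * (/ 2) ^ S p) with (s0 * (/ 2) ^ p / 2) by (simpl; field).
    apply (Phi_contraction (fst (picard (S p))) (snd (picard (S p))) (fst (picard p)) (snd (picard p)));
      try apply admissible_regular, picard_admissible; auto.
    apply Rmult_le_pos; [apply s0_nonneg|apply pow_le; lra].
Qed.

Definition Vlim (y : R) : vec n := fun i => seq_limit (fun p => fst (picard p) y i).
Definition Wlim (y : R) : vec k := fun i => seq_limit (fun p => snd (picard p) y i).

Lemma Vlim_rate y i p : 0 <= y <= T -> Rabs (Vlim y i - fst (picard p) y i) <= 2 * s0 * (/ 2) ^ p.
Proof.
  intros Hy. apply (seq_limit_geometric (fun p => fst (picard p) y i) s0 s0_nonneg). intros q.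
  eapply Rle_trans; [apply (abs_le_norm1 _ (vsub (fst (picard (S q)) y) (fst (picard q) y)))|].
  apply picard_step; auto.
Qed.

Lemma Wlim_rate y i p : 0 <= y <= T ->
  Rabs (Wlim y i - snd (picard p) y i) <= 2 * (s0 / lam * exp (- c * y / 2)) * (/ 2) ^ p.
Proof.
  intros Hy. assert (HC : 0 <= s0 / lam * exp (- c * y / 2)).
  { pose proof lam_inv. pose proof s0_nonneg. pose proof (exp_pos (- c * y / 2)).
    unfold Rdiv. apply Rmult_le_pos; [apply Rmult_le_pos|]; lra. }
  apply (seq_limit_geometric (fun p => snd (picard p) y i) _ HC). intros q.
  eapply Rle_trans; [apply (abs_le_norm1 _ (vsub (snd (picard (S q)) y) (snd (picard q) y)))|].
  eapply Rle_trans; [apply picard_step; auto|]. right. field. lra.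
Qed.

Definition Klim := 2 * (INR n + INR k) * s0.

Lemma limit_close p : close lam (Klim * (/ 2) ^ p) Vlim Wlim (fst (picard p)) (snd (picard p)).
Proof.
  intros y Hy. pose proof s0_nonneg. pose proof (pos_INR n). pose proof (pos_INR k).
  pose proof (pow_le (/ 2) p ltac:(lra)). pose proof (exp_pos (- c * y / 2)). pose proof lam_inv.
  assert (Hq : 0 <= s0 * (/ 2) ^ p) by (apply Rmult_le_pos; lra).
  assert (0 <= INR k * (s0 * (/ 2) ^ p)) by (apply Rmult_le_pos; lra).
  assert (0 <= INR n * (s0 * (/ 2) ^ p)) by (apply Rmult_le_pos; lra).
  split.
  - eapply Rle_trans; [apply norm1_le_const; intros i; apply Vlim_rate; auto|]. unfold Klim. nra.
  - eapply Rle_trans; [apply norm1_le_const; intros i; apply Wlim_rate; auto|].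
    replace (INR k * (2 * (s0 / lam * exp (- c * y / 2)) * (/ 2) ^ p))
      with (INR k * (2 * s0 * (/ 2) ^ p) * (/ lam * exp (- c * y / 2))) by (unfold Rdiv; ring).
    replace (Klim * (/ 2) ^ p / lam * exp (- c * y / 2))
      with (Klim * (/ 2) ^ p * (/ lam * exp (- c * y / 2))) by (unfold Rdiv; ring).
    apply Rmult_le_compat_r; [apply Rmult_le_pos; lra|]. unfold Klim. nra.
Qed.

Lemma limit_admissible : admissible Vlim Wlim.
Proof.
  pose proof s0_nonneg. pose proof (pos_INR n). pose proof (pos_INR k). pose proof lam_inv.
  assert (HK : 0 <= Klim) by (unfold Klim; nra).
  split; [|split].
  - intros y Hy. pose proof (exp_pos (- c * y / 2)). split.
    + apply (le_of_geometric _ _ Klim HK). intros p.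
      destruct (limit_close p y Hy) as [L _]. destruct (picard_admissible p) as [B _]. destruct (B y Hy) as [B1 _].
      pose proof (norm1_triangle _ (Vlim y) (fst (picard p) y) Ubar). lra.
    + apply (le_of_geometric _ _ Klim HK). intros p.
      destruct (limit_close p y Hy) as [_ L]. destruct (picard_admissible p) as [B _]. destruct (B y Hy) as [_ B2].
      pose proof (norm1_triangle _ (Wlim y) (snd (picard p) y) (vzero k)). rewrite !norm1_sub_zero in *.
      assert (Klim * (/ 2) ^ p / lam * exp (- c * y / 2) <= Klim * (/ 2) ^ p).
      { unfold Rdiv. rewrite Rmult_assoc. pose proof (pow_le (/ 2) p ltac:(lra)).
        refine (proj2 (scale_le_1 _ _ _ _)); [apply Rmult_le_pos; lra|].
        pose proof (decay_le_1 y ltac:(lra)). split; [apply Rmult_lt_0_compat|]; nra. }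
      nra.
  - intros j x. apply (cont_uniform_limit (fun p t => fst (picard p) (ct t) j) _ (fun p => 2 * s0 * (/ 2) ^ p)).
    + intros p. apply (picard_admissible p).
    + intros p t. apply Vlim_rate, ct_in.
    + apply half_pow_small. lra.
  - intros j x. apply (cont_uniform_limit (fun p t => snd (picard p) (ct t) j) _ (fun p => 2 * s0 * (/ 2) ^ p)).
    + intros p. apply (picard_admissible p).
    + intros p t. eapply Rle_trans; [apply Wlim_rate, ct_in|]. pose proof (ct_in t).
      pose proof (decay_le_1 (ct t) ltac:(lra)). pose proof (exp_pos (- c * ct t / 2)).
      pose proof (pow_le (/ 2) p ltac:(lra)).
      replace (2 * (s0 / lam * exp (- c * ct t / 2)) * (/ 2) ^ p)
        with (2 * s0 * (/ 2) ^ p * (/ lam * exp (- c * ct t / 2))) by (unfold Rdiv; ring).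
      refine (proj2 (scale_le_1 _ _ _ _)); [nra|split; [apply Rmult_lt_0_compat|]; nra].
    + apply half_pow_small. lra.
Qed.

(** The limit is a fixed point: it is within [Klim 2^{-p}] both of the iterate
    [p+1] and, by contraction, of the image of the limit. *)
Lemma limit_fixed : fixed_point Vlim Wlim.
Proof.
  pose proof s0_nonneg. pose proof (pos_INR n). pose proof (pos_INR k).
  assert (HK : 0 <= Klim) by (unfold Klim; nra).
  intros z Hz.
  assert (Hclose : forall p, close lam (Klim * (/ 2) ^ p) Vlim Wlim (PhiV Vlim Wlim) (PhiW Vlim Wlim)).
  { intros p. replace (Klim * (/ 2) ^ p) with (Klim * (/ 2) ^ S p + Klim * (/ 2) ^ p / 2) by (simpl; field).
    apply (close_triangle _ _ _ _ _ (fst (picard (S p))) (snd (picard (S p)))); [apply limit_close|].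
    assert (Hpos : 0 <= Klim * (/ 2) ^ p) by (apply Rmult_le_pos; [lra|apply pow_le; lra]).
    exact (Phi_contraction _ _ _ _ _ (admissible_regular _ _ (picard_admissible p))
             (admissible_regular _ _ limit_admissible) Hpos (close_sym _ _ _ _ _ _ (limit_close p))). }
  destruct (close_geometric_eq Klim Vlim Wlim (PhiV Vlim Wlim) (PhiW Vlim Wlim) HK Hclose z Hz). auto.
Qed.

Lemma T_eq : delta / eps = T.
Proof. rewrite <- HT. field. lra. Qed.

Lemma Rmin_Rmax_in a b y : Rmin a b <= y <= Rmax a b -> 0 <= a <= T -> 0 <= b <= T -> 0 <= y <= T.
Proof. unfold Rmin, Rmax. destruct Rle_dec; lra. Qed.

Definition integrandV (V : R -> vec n) (W : R -> vec k) i y :=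
  mv (Psi (V y) (W y) (eps * y) eps) (W y) i.

Definition integrandW (V : R -> vec n) (W : R -> vec k) (z : R) i y :=
  mv (mexp (madd (mscal (z - y) (Lam Ubar (vzero k) 0 0))
                 (mscal (- (eps * z ^ 2 / 2) + eps * y ^ 2 / 2) (mid k))))
     (mv (msub (msub (Lam (V y) (W y) (eps * y) eps) (Lam Ubar (vzero k) 0 0))
               (mscal (eps * y) (msub (Ups (V y) (W y) (eps * y) eps) (mid k))))
         (W y)) i.

Lemma integrandV_eq V W i y : 0 <= y <= T -> integrandV V W i y = rhsV V W i y.
Proof. intros Hy. unfold integrandV, rhsV, ct. rewrite clamp_id; auto. Qed.

(** Since [Lam Ubar 0 0 0] is diagonal, the matrix exponentials are the scalar propagators. *)
Lemma integrandW_eq V W z i y : 0 <= y <= T -> integrandW V W z i y = prop i z * rhsW_weighted V W i y.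
Proof.
  intros Hy. unfold integrandW, rhsW_weighted, rhsW, pertW, prop, ct. rewrite clamp_id by auto.
  rewrite HLam0, diag_add, mexp_diag, mv_diag, <- Rmult_assoc, <- exp_plus. do 2 f_equal. ring.
Qed.

Lemma initial_term_eq z i :
  mv (mexp (msub (mscal z (Lam Ubar (vzero k) 0 0)) (mscal (eps * z ^ 2 / 2) (mid k)))) Wbar i = prop i z * Wbar i.
Proof. rewrite HLam0, diag_sub, mexp_diag, mv_diag. unfold prop. do 2 f_equal. ring. Qed.

Lemma good_solution_V V W cV cW : good_solution Psi Lam Ups Ubar Ue Wbar c delta eps cV cW V W ->
  forall i z, 0 <= z <= T -> ex_RInt (rhsV V W i) z T /\ V z i = PhiV V W z i.
Proof.
  intros [_ [_ [GV _]]] i z Hz. rewrite T_eq in GV.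
  destruct (GV z Hz i) as [I [HI E]]. apply RInt_eq_to in HI. destruct HI as [HI1 HI2].
  change (ex_RInt (integrandV V W i) T z) in HI1. change (RInt (integrandV V W i) T z = I) in HI2.
  assert (Heq : forall y, Rmin T z < y < Rmax T z -> integrandV V W i y = rhsV V W i y).
  { intros y Hy. apply integrandV_eq, (Rmin_Rmax_in T z); lra. }
  split.
  - apply ex_RInt_swap, (ex_RInt_ext (integrandV V W i)); auto.
  - unfold PhiV. rewrite (RInt_ext (integrandV V W i) (rhsV V W i) T z Heq) in HI2; rewrite HI2. lra.
Qed.

Lemma good_solution_W V W cV cW : good_solution Psi Lam Ups Ubar Ue Wbar c delta eps cV cW V W ->
  forall i z, 0 <= z <= T -> ex_RInt (rhsW_weighted V W i) 0 z /\ W z i = PhiW V W z i.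
Proof.
  intros [_ [_ [_ [GW _]]]] i z Hz. rewrite T_eq in GW.
  destruct (GW z Hz i) as [I [HI E]]. apply RInt_eq_to in HI. destruct HI as [HI1 HI2].
  change (ex_RInt (integrandW V W z i) 0 z) in HI1. change (RInt (integrandW V W z i) 0 z = I) in HI2.
  rewrite initial_term_eq in E. pose proof (exp_pos (lb i * z - eps * z ^ 2 / 2)) as Hp. fold (prop i z) in Hp.
  assert (Heq : forall y, Rmin 0 z < y < Rmax 0 z -> integrandW V W z i y = prop i z * rhsW_weighted V W i y).
  { intros y Hy. apply integrandW_eq, (Rmin_Rmax_in 0 z); lra. }
  assert (X : ex_RInt (rhsW_weighted V W i) 0 z).
  { apply (ex_RInt_ext (fun y => / prop i z * integrandW V W z i y)).
    - intros y Hy. rewrite Heq, <- Rmult_assoc, Rinv_l, Rmult_1_l by (auto; lra). reflexivity.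
    - apply (ex_RInt_scal (integrandW V W z i)); auto. }
  split; auto.
  assert (ES : prop i z * RInt (rhsW_weighted V W i) 0 z = RInt (fun y => prop i z * rhsW_weighted V W i y) 0 z)
    by (symmetry; apply (RInt_scal (rhsW_weighted V W i) 0 z (prop i z) X)).
  unfold PhiW. rewrite Rmult_plus_distr_l, ES, <- (RInt_ext (integrandW V W z i) _ 0 z Heq), HI2. lra.
Qed.

Lemma good_solution_fixed V W cV cW : 0 <= cV -> 0 <= cW ->
  INR n * (cV * delta) <= A0 -> INR k * (cW * delta) <= B0 ->
  good_solution Psi Lam Ups Ubar Ue Wbar c delta eps cV cW V W -> regular V W /\ fixed_point V W.
Proof.
  intros HcV HcW H1 H2 G. pose proof (good_solution_V V W cV cW G) as GV. pose proof (good_solution_W V W cV cW G) as GW.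
  split; [split; [|split]|].
  - intros y Hy. destruct G as [_ [_ [_ [_ GB]]]]. rewrite T_eq in GB. destruct (GB y Hy) as [B1 B2].
    pose proof (norm1_le_vnorm _ (vsub (V y) Ubar)). pose proof (norm1_le_vnorm _ (W y)).
    pose proof (pos_INR n). pose proof (pos_INR k). pose proof (exp_pos (- c * y / 2)).
    assert (INR n * vnorm (vsub (V y) Ubar) <= INR n * (cV * delta)) by (apply Rmult_le_compat_l; auto).
    assert (INR k * vnorm (W y) <= INR k * (cW * exp (- c * y / 2) * delta)) by (apply Rmult_le_compat_l; auto).
    assert (INR k * (cW * delta) * exp (- c * y / 2) <= B0 * exp (- c * y / 2)) by (apply Rmult_le_compat_r; lra).
    split; nra.
  - intros i z Hz. apply GV; auto.
  - intros i z Hz. apply GW; auto.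
  - intros z Hz. split; intros i; [apply GV|apply GW]; auto.
Qed.

Lemma limit_good_solution cV cW : aS <= cV * delta -> bS <= cW * delta ->
  good_solution Psi Lam Ups Ubar Ue Wbar c delta eps cV cW Vlim Wlim.
Proof.
  intros HaV HbW. pose proof limit_admissible as G. pose proof (admissible_integrable _ _ G) as [EX1 EX2].
  pose proof limit_fixed as F. destruct G as [GI [GCV GCW]].
  unfold good_solution. cbv zeta. rewrite T_eq. split; [|split; [|split; [|split]]].
  - intros i. apply (cont_int_of_continuous _ (fun t => Vlim (ct t) i)); [apply GCV|].
    intros y Hy. unfold ct. rewrite clamp_id; auto.
  - intros i. apply (cont_int_of_continuous _ (fun t => Wlim (ct t) i)); [apply GCW|].
    intros y Hy. unfold ct. rewrite clamp_id; auto.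
  - intros z Hz i. exists (RInt (rhsV Vlim Wlim i) T z). split.
    + assert (Heq : forall y, Rmin T z < y < Rmax T z -> rhsV Vlim Wlim i y = integrandV Vlim Wlim i y).
      { intros y Hy. symmetry. apply integrandV_eq, (Rmin_Rmax_in T z); lra. }
      rewrite (RInt_ext _ _ _ _ Heq). apply RInt_eq_of, (ex_RInt_ext (rhsV Vlim Wlim i)); auto.
      apply ex_RInt_swap. auto.
    + destruct (F z Hz) as [FV _]. rewrite FV. reflexivity.
  - intros z Hz i. exists (prop i z * RInt (rhsW_weighted Vlim Wlim i) 0 z). split.
    + assert (Heq : forall y, Rmin 0 z < y < Rmax 0 z ->
                    prop i z * rhsW_weighted Vlim Wlim i y = integrandW Vlim Wlim z i y).
      { intros y Hy. symmetry. apply integrandW_eq, (Rmin_Rmax_in 0 z); lra. }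
      assert (ES : prop i z * RInt (rhsW_weighted Vlim Wlim i) 0 z
                   = RInt (fun y => prop i z * rhsW_weighted Vlim Wlim i y) 0 z)
        by (symmetry; apply (RInt_scal (rhsW_weighted Vlim Wlim i) 0 z (prop i z)); auto).
      rewrite ES, (RInt_ext _ _ _ _ Heq).
      apply RInt_eq_of, (ex_RInt_ext (fun y => prop i z * rhsW_weighted Vlim Wlim i y)); auto.
      apply (ex_RInt_scal (rhsW_weighted Vlim Wlim i)); auto.
    + rewrite initial_term_eq. destruct (F z Hz) as [_ FW]. rewrite FW. unfold PhiW. ring.
  - intros z Hz. destruct (GI z Hz) as [B1 B2].
    pose proof (vnorm_le_norm1 _ (vsub (Vlim z) Ubar)). pose proof (vnorm_le_norm1 _ (Wlim z)).
    pose proof (exp_pos (- c * z / 2)).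
    assert (bS * exp (- c * z / 2) <= cW * delta * exp (- c * z / 2)) by (apply Rmult_le_compat_r; lra).
    split; nra.
Qed.

Lemma integral_system_solution cV cW : 0 <= cV -> 0 <= cW ->
  INR n * (cV * delta) <= A0 -> INR k * (cW * delta) <= B0 -> aS <= cV * delta -> bS <= cW * delta ->
  exists (V : R -> vec n) (W : R -> vec k),
    good_solution Psi Lam Ups Ubar Ue Wbar c delta eps cV cW V W /\
    forall (V' : R -> vec n) (W' : R -> vec k),
      good_solution Psi Lam Ups Ubar Ue Wbar c delta eps cV cW V' W' ->
      forall z, 0 <= z <= delta / eps -> (forall i, V' z i = V z i) /\ (forall j, W' z j = W z j).
Proof.
  intros HcV HcW H1 H2 H3 H4. exists Vlim, Wlim. split; [apply limit_good_solution; auto|].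
  intros V' W' G z Hz. rewrite T_eq in Hz.
  destruct (good_solution_fixed V' W' cV cW) as [R' F']; auto.
  apply (fixed_point_unique Vlim Wlim V' W'); auto.
  - apply admissible_regular, limit_admissible.
  - apply limit_fixed.
Qed.

End IntegralSystem.

(** With [NN], [KK] the dimensions (as reals), [Lc],
    [Bp] the coefficient bounds, [A0 = NN delta] and [B0 = KK delta], the
    conditions of [integral_system_solution] reduce to finitely many inequalities
    [a delta <= b]; each holds for small [delta]. *)

Definition for_small (P : R -> Prop) := exists d, 0 < d /\ forall delta, 0 < delta <= d -> P delta.

Lemma for_small_and P Q : for_small P -> for_small Q -> for_small (fun delta => P delta /\ Q delta).
Proof.
  intros [d1 [Hd1 H1]] [d2 [Hd2 H2]]. exists (Rmin d1 d2). split; [apply Rmin_glb_lt; auto|].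
  intros delta Hd. pose proof (Rmin_l d1 d2). pose proof (Rmin_r d1 d2). split; [apply H1|apply H2]; lra.
Qed.

Lemma for_small_linear a b : 0 <= a -> 0 < b -> for_small (fun delta => a * delta <= b).
Proof.
  intros Ha Hb. exists (b / (a + 1)). split; [apply Rdiv_lt_0_compat; lra|].
  intros delta [Hd Hd']. apply (Rmult_le_compat_l (a + 1)) in Hd'; [|lra].
  replace ((a + 1) * (b / (a + 1))) with b in Hd' by (field; lra). nra.
Qed.

Section Constants.
Variables (NN KK c rho Lc Bp : R).
Hypotheses (HNN : 1 <= NN) (HKK : 1 <= KK) (Hc : 0 < c) (Hrho : 0 < rho) (HLc : 0 <= Lc) (HBp : 0 <= Bp).

Let S := NN + KK + 2.
Let mu delta := muW delta Lc (NN * delta) (KK * delta).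

Definition lam0 := 8 * NN * (Bp + 1) / c + 1.
Definition cW0 := Rmin (1 / 2) (c / (8 * NN * (Bp + 1))).

Lemma lam0_ge_1 : 1 <= lam0.
Proof. unfold lam0. assert (0 <= 8 * NN * (Bp + 1) / c) by (apply Rmult_le_pos; [nra|left; apply Rinv_0_lt_compat; lra]). lra. Qed.

Lemma cW0_bounds : 0 < cW0 <= 1 / 2 /\ cW0 * (8 * NN * (Bp + 1)) <= c.
Proof.
  assert (0 < 8 * NN * (Bp + 1)) by nra. unfold cW0. split; [split|].
  - apply Rmin_glb_lt; [lra|apply Rdiv_lt_0_compat; lra].
  - apply Rmin_l.
  - pose proof (Rmin_r (1 / 2) (c / (8 * NN * (Bp + 1)))).
    apply (Rmult_le_compat_r (8 * NN * (Bp + 1))) in H0; [|lra].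
    replace (c / (8 * NN * (Bp + 1)) * (8 * NN * (Bp + 1))) with c in H0 by (field; lra). lra.
Qed.

Lemma mu_le delta : 0 <= delta <= 1 -> 0 <= mu delta <= 2 * (Lc + 1) * S * delta.
Proof.
  intros Hd. unfold mu, muW, S.
  replace (NN * delta + KK * delta + 2 * delta) with ((NN + KK + 2) * delta) by ring.
  assert (0 <= (NN + KK + 2) * delta) by nra. assert ((1 + delta) * Lc <= 2 * (Lc + 1)) by nra.
  split; [apply Rmult_le_pos; [apply Rmult_le_pos|]; lra|]. nra.
Qed.

Lemma invariance_V delta : 0 < delta ->
  NN * (2 * (Bp * (cW0 * delta)) / c) <= delta / 4.
Proof.
  intros Hd. destruct cW0_bounds as [[Hw0 Hw1] Hw2].
  replace (NN * (2 * (Bp * (cW0 * delta)) / c)) with ((2 * NN * Bp * cW0) * (delta / c)) by (field; lra).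
  replace (delta / 4) with ((c / 4) * (delta / c)) by (field; lra).
  apply Rmult_le_compat_r; [apply Rmult_le_pos; [lra|left; apply Rinv_0_lt_compat; lra]|]. nra.
Qed.

Lemma invariance_W delta : 0 < delta <= 1 -> (8 * KK * (Lc + 1) * S) * delta <= c ->
  KK * (2 * (mu delta * (cW0 * delta)) / c) <= cW0 * delta / 2.
Proof.
  intros Hd Hsmall. destruct cW0_bounds as [[Hw0 Hw1] _]. destruct (mu_le delta ltac:(lra)) as [Hm0 Hm].
  replace (KK * (2 * (mu delta * (cW0 * delta)) / c)) with ((KK * 2 * mu delta) * (cW0 * delta / c)) by (field; lra).
  replace (cW0 * delta / 2) with ((c / 2) * (cW0 * delta / c)) by (field; lra).
  apply Rmult_le_compat_r; [apply Rmult_le_pos; [nra|left; apply Rinv_0_lt_compat; lra]|].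
  assert (KK * 2 * mu delta <= KK * 2 * (2 * (Lc + 1) * S * delta)) by (apply Rmult_le_compat_l; lra). nra.
Qed.

Lemma contraction_V delta : 0 < delta -> (16 * NN * KK * (Lc + 1)) * delta <= c ->
  NN * (2 * (Bp / lam0 + Lc * (1 + 1 / lam0) * (KK * delta)) / c) <= 1 / 2.
Proof.
  intros Hd Hsmall. pose proof lam0_ge_1.
  assert (Hl : 0 < / lam0 <= 1) by (split; [apply Rinv_0_lt_compat; lra|rewrite <- Rinv_1; apply Rinv_le_contravar; lra]).
  assert (A1 : NN * (2 * (Bp / lam0) / c) <= 1 / 4).
  { assert (Hlc : 8 * NN * (Bp + 1) <= lam0 * c) by (unfold lam0; replace ((8 * NN * (Bp + 1) / c + 1) * c) with (8 * NN * (Bp + 1) + c) by (field; lra); lra).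
    replace (NN * (2 * (Bp / lam0) / c)) with (2 * NN * Bp / (lam0 * c)) by (field; lra).
    apply (Rmult_le_reg_r (lam0 * c)); [nra|]. unfold Rdiv. rewrite Rmult_assoc, Rinv_l by nra. nra. }
  assert (A2 : NN * (2 * (Lc * (1 + 1 / lam0) * (KK * delta)) / c) <= 1 / 4).
  { assert (Lc * (1 + 1 / lam0) <= 2 * (Lc + 1)) by (unfold Rdiv; rewrite Rmult_1_l; nra).
    apply (Rmult_le_reg_r c); [lra|]. unfold Rdiv. rewrite !Rmult_assoc, Rinv_l, Rmult_1_r by lra.
    assert (Lc * (1 + 1 * / lam0) * (KK * delta) <= 2 * (Lc + 1) * (KK * delta)) by (apply Rmult_le_compat_r; nra).
    nra. }
  replace (NN * (2 * (Bp / lam0 + Lc * (1 + 1 / lam0) * (KK * delta)) / c)) with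
    (NN * (2 * (Bp / lam0) / c) + NN * (2 * (Lc * (1 + 1 / lam0) * (KK * delta)) / c)) by (field; lra).
  lra.
Qed.

Lemma contraction_W delta : 0 < delta <= 1 -> (4 * lam0 * KK * (Lc + 1) * (2 * S + 4 * KK)) * delta <= c ->
  KK * (2 * (mu delta / lam0 + (1 + delta) * Lc * (1 + 1 / lam0) * (KK * delta)) / c) <= 1 / (2 * lam0).
Proof.
  intros Hd Hsmall. pose proof lam0_ge_1. destruct (mu_le delta ltac:(lra)) as [Hm0 Hm].
  assert (Hl : 0 < / lam0 <= 1) by (split; [apply Rinv_0_lt_compat; lra|rewrite <- Rinv_1; apply Rinv_le_contravar; lra]).
  assert (B1 : mu delta / lam0 <= 2 * (Lc + 1) * S * delta) by (unfold Rdiv; nra).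
  assert (B2 : (1 + delta) * Lc * (1 + 1 / lam0) * (KK * delta) <= 4 * (Lc + 1) * KK * delta).
  { assert ((1 + delta) * Lc * (1 + 1 / lam0) <= 4 * (Lc + 1)).
    { unfold Rdiv; rewrite Rmult_1_l. assert (0 <= (1 + delta) * Lc <= 2 * (Lc + 1)) by (split; nra). nra. }
    assert (0 <= KK * delta) by nra. nra. }
  apply (Rmult_le_reg_r (2 * lam0 * c)); [nra|].
  replace (1 / (2 * lam0) * (2 * lam0 * c)) with c by (field; lra).
  replace (KK * (2 * (mu delta / lam0 + (1 + delta) * Lc * (1 + 1 / lam0) * (KK * delta)) / c) * (2 * lam0 * c))
    with (4 * lam0 * KK * (mu delta / lam0 + (1 + delta) * Lc * (1 + 1 / lam0) * (KK * delta))) by (field; lra).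
  assert (mu delta / lam0 + (1 + delta) * Lc * (1 + 1 / lam0) * (KK * delta) <= (Lc + 1) * (2 * S + 4 * KK) * delta)
    by nra.
  assert (0 <= 4 * lam0 * KK) by nra. nra.
Qed.

Definition admissible_delta delta :=
  S * delta <= rho /\ delta <= 1 /\
  NN * (2 * (Bp * (cW0 * delta)) / c) <= delta / 4 /\
  KK * (2 * (mu delta * (cW0 * delta)) / c) <= cW0 * delta / 2 /\
  NN * (2 * (Bp / lam0 + Lc * (1 + 1 / lam0) * (KK * delta)) / c) <= 1 / 2 /\
  KK * (2 * (mu delta / lam0 + (1 + delta) * Lc * (1 + 1 / lam0) * (KK * delta)) / c) <= 1 / (2 * lam0).

Lemma small_delta_admissible : for_small admissible_delta.
Proof.
  pose proof lam0_ge_1. assert (0 < S) by (unfold S; lra).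
  assert (P1 : 0 <= 8 * KK * (Lc + 1) * S) by (repeat apply Rmult_le_pos; lra).
  assert (P2 : 0 <= 16 * NN * KK * (Lc + 1)) by (repeat apply Rmult_le_pos; lra).
  assert (P3 : 0 <= 4 * lam0 * KK * (Lc + 1) * (2 * S + 4 * KK)) by (repeat apply Rmult_le_pos; lra).
  destruct (for_small_and _ _ (for_small_linear S rho ltac:(lra) Hrho)
             (for_small_and _ _ (for_small_linear 1 1 ltac:(lra) ltac:(lra))
               (for_small_and _ _ (for_small_linear (8 * KK * (Lc + 1) * S) c P1 Hc)
                 (for_small_and _ _ (for_small_linear (16 * NN * KK * (Lc + 1)) c P2 Hc)
                   (for_small_linear (4 * lam0 * KK * (Lc + 1) * (2 * S + 4 * KK)) c P3 Hc)))))
    as [d [Hd Hsmall]].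
  exists d. split; auto. intros delta Hdelta. destruct (Hsmall delta Hdelta) as [H1 [H2 [H3 [H4 H5]]]].
  repeat split; try lra.
  - apply invariance_V; lra.
  - apply invariance_W; lra.
  - apply contraction_V; lra.
  - apply contraction_W; lra.
Qed.

End Constants.

Lemma coefficient_bounds n k (Psi : vec n -> vec k -> R -> R -> mat n k)
    (Lam Ups : vec n -> vec k -> R -> R -> mat k k) (Ubar : vec n) d0 :
  0 < d0 -> smooth_coef (box Ubar d0) Psi -> smooth_coef (box Ubar d0) Lam -> smooth_coef (box Ubar d0) Ups ->
  exists rho Lc Bp, 0 < rho /\ 0 <= Lc /\ 0 <= Bp /\
    lipschitz_near Ubar rho Lc Psi /\ lipschitz_near Ubar rho Lc Lam /\ lipschitz_near Ubar rho Lc Ups /\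
    forall i j V W a b, near_base n k Ubar rho V W a b -> Rabs (Psi V W a b i j) <= Bp.
Proof.
  intros Hd0 SP SL SU.
  destruct (coef_lipschitz _ _ _ _ Ubar d0 Psi Hd0 SP) as [r1 [L1 [Hr1 [HL1 LP]]]].
  destruct (coef_lipschitz _ _ _ _ Ubar d0 Lam Hd0 SL) as [r2 [L2 [Hr2 [HL2 LL]]]].
  destruct (coef_lipschitz _ _ _ _ Ubar d0 Ups Hd0 SU) as [r3 [L3 [Hr3 [HL3 LU]]]].
  destruct (entry_bound _ _ (Psi Ubar (vzero k) 0 0)) as [B0 [HB0 HB0b]].
  set (rho := Rmin r1 (Rmin r2 r3)). set (Lc := L1 + L2 + L3).
  assert (Hrho : 0 < rho /\ rho <= r1 /\ rho <= r2 /\ rho <= r3).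
  { unfold rho. pose proof (Rmin_l r1 (Rmin r2 r3)). pose proof (Rmin_r r1 (Rmin r2 r3)).
    pose proof (Rmin_l r2 r3). pose proof (Rmin_r r2 r3).
    split; [apply Rmin_glb_lt; auto; apply Rmin_glb_lt; auto|lra]. }
  exists rho, Lc, (B0 + Lc * rho).
  assert (LP' : lipschitz_near Ubar rho Lc Psi) by (apply (lipschitz_near_mono _ _ _ _ _ r1 L1); unfold Lc; auto; lra).
  split; [lra|]. split; [unfold Lc; lra|].
  split; [unfold Lc; assert (0 <= (L1 + L2 + L3) * rho) by (apply Rmult_le_pos; lra); lra|].
  split; [exact LP'|]. split; [|split].
  - apply (lipschitz_near_mono _ _ _ _ _ r2 L2); unfold Lc; auto; lra.
  - apply (lipschitz_near_mono _ _ _ _ _ r3 L3); unfold Lc; auto; lra.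
  - (* [|Psi| <= |Psi(base)| + Lc * rho] by the Lipschitz bound from the base point *)
    intros i j V W a b H. unfold near_base in H.
    pose proof (LP' i j Ubar (vzero k) 0 0 V W a b ltac:(rewrite dist4_diag; lra) H) as X.
    pose proof (HB0b i j). pose proof (dist4_nonneg _ _ V W a b Ubar (vzero k) 0 0).
    replace (Psi V W a b i j) with (Psi Ubar (vzero k) 0 0 i j + (Psi V W a b i j - Psi Ubar (vzero k) 0 0 i j)) by ring.
    eapply Rle_trans; [apply Rabs_triang|].
    assert (Lc * dist4 V W a b Ubar (vzero k) 0 0 <= Lc * rho) by (apply Rmult_le_compat_l; unfold Lc; lra).
    lra.
Qed.

Lemma solution_small_data n k (Psi : vec n -> vec k -> R -> R -> mat n k)
    (Lam Ups : vec n -> vec k -> R -> R -> mat k k) (Ubar : vec n) (lb : Fin.t k -> R)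
    (c rho Lc Bp delta eps : R) (Ue : vec n) (Wbar : vec k) :
  1 <= INR n -> 1 <= INR k -> 0 < c -> (forall i, lb i <= - c) -> 0 <= Lc -> 0 <= Bp ->
  lipschitz_near Ubar rho Lc Psi -> lipschitz_near Ubar rho Lc Lam -> lipschitz_near Ubar rho Lc Ups ->
  (forall i j V W a b, near_base n k Ubar rho V W a b -> Rabs (Psi V W a b i j) <= Bp) ->
  Lam Ubar (vzero k) 0 0 = mdiag lb -> Ups Ubar (vzero k) 0 0 = mid k ->
  admissible_delta (INR n) (INR k) c rho Lc Bp delta -> 0 < delta -> 0 < eps <= delta ->
  vnorm (vsub Ue Ubar) <= delta / (4 * INR n) -> vnorm Wbar <= cW0 (INR n) c Bp / (2 * INR k) * delta ->
  exists (V : R -> vec n) (W : R -> vec k),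
    good_solution Psi Lam Ups Ubar Ue Wbar c delta eps (1 / 2) (cW0 (INR n) c Bp) V W /\
    forall (V' : R -> vec n) (W' : R -> vec k),
      good_solution Psi Lam Ups Ubar Ue Wbar c delta eps (1 / 2) (cW0 (INR n) c Bp) V' W' ->
      forall z, 0 <= z <= delta / eps -> (forall i, V' z i = V z i) /\ (forall j, W' z j = W z j).
Proof.
  intros HN HK Hc Hlb HLc HBp LP LL LU HPB HL0 HU0 [Hreg [Hd1 [Hi1 [Hi2 [Hk1 Hk2]]]]] Hd Heps HUe HWb.
  destruct (cW0_bounds (INR n) c Bp HN Hc HBp) as [[Hw0 Hw1] _].
  assert (HUe1 : norm1 (vsub Ue Ubar) <= delta / 4).
  { pose proof (norm1_le_vnorm _ (vsub Ue Ubar)). apply (Rmult_le_compat_l (INR n)) in HUe; [|lra].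
    replace (INR n * (delta / (4 * INR n))) with (delta / 4) in HUe by (field; lra). lra. }
  assert (HWb1 : norm1 Wbar <= cW0 (INR n) c Bp * delta / 2).
  { pose proof (norm1_le_vnorm _ Wbar). apply (Rmult_le_compat_l (INR k)) in HWb; [|lra].
    replace (INR k * (cW0 (INR n) c Bp / (2 * INR k) * delta)) with (cW0 (INR n) c Bp * delta / 2) in HWb
      by (field; lra). lra. }
  (* the operator setting: [T = delta/eps], [A0 = n delta], [B0 = k delta], [aS = delta/2],
     [bS = cW0 delta] and weight [lam0]; the side conditions are those of [admissible_delta] *)
  apply (integral_system_solution n k Psi Lam Ups Ubar lb c eps (delta / eps) delta Ue Wbar rho Lc Bp
           (INR n * delta) (INR k * delta) Hc Hlb ltac:(lra) ltac:(field; lra) ltac:(lra) ltac:(nra) ltac:(nra)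
           ltac:(lra) HLc HBp LP LL LU HPB HL0 HU0 (delta / 2) (cW0 (INR n) c Bp * delta) (lam0 (INR n) c Bp));
    try split; try lra; try nra.
  - apply lam0_ge_1; lra.
  - apply Rmult_le_compat_l; nra.
Qed.

Theorem lemma3p2
  (k m : nat) (Hk : (1 <= k)%nat) (Hm : (1 <= m)%nat)
  (A : vec (k + m) -> mat (k + m) (k + m))
  (lam : Fin.t (k + m) -> vec (k + m) -> R) (c : R)
  (Psi : vec (k + m) -> vec k -> R -> R -> mat (k + m) k)
  (Lam Ups : vec (k + m) -> vec k -> R -> R -> mat k k)
  (Ubar : vec (k + m)) (Ueps : R -> vec (k + m))
  (* A smooth, strictly hyperbolic, eigenvalues separated by the gap (-c, c) *)
  (HA : forall i j, smooth_on (fun _ => True) (fun U => A U i j))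
  (Heig : forall i U, exists r : vec (k + m), r <> vzero (k + m) /\
            mv (A U) r = (fun l => lam i U * r l))
  (Hord : forall i j U, (proj1_sig (Fin.to_nat i) < proj1_sig (Fin.to_nat j))%nat ->
            lam i U < lam j U)
  (Hc : 0 < c)
  (Hneg : forall i U, (proj1_sig (Fin.to_nat i) < k)%nat -> lam i U < - c)
  (Hpos : forall i U, (k <= proj1_sig (Fin.to_nat i))%nat -> c < lam i U)
  (* Psi, Lam, Ups smooth near (Ubar, 0, 0, 0) *)
  (Hsm : exists d0, 0 < d0 /\ smooth_coef (box Ubar d0) Psi /\
            smooth_coef (box Ubar d0) Lam /\ smooth_coef (box Ubar d0) Ups)
  (HLam0 : Lam Ubar (vzero k) 0 0 = mdiag (fun i => lam (Fin.L m i) Ubar))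
  (HUps0 : Ups Ubar (vzero k) 0 0 = mid k)
  (* Ubar^eps -> Ubar as eps -> 0+ *)
  (HUeps : forall eta, 0 < eta -> exists e1, 0 < e1 /\
            forall eps, 0 < eps < e1 -> vnorm (vsub (Ueps eps) Ubar) < eta) :
  exists dstar, 0 < dstar /\
  forall delta, 0 < delta <= dstar ->
  exists cV theta cW, (0 < cV < 1) /\ (0 < theta < 1) /\ (0 < cW < 1) /\
  exists eps0, 0 < eps0 /\
  forall eps, 0 < eps < eps0 ->
  forall Wbar : vec k, vnorm Wbar <= theta * delta ->
  exists (V : R -> vec (k + m)) (W : R -> vec k),
    good_solution Psi Lam Ups Ubar (Ueps eps) Wbar c delta eps cV cW V W /\
    forall (V' : R -> vec (k + m)) (W' : R -> vec k),
      good_solution Psi Lam Ups Ubar (Ueps eps) Wbar c delta eps cV cW V' W' ->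
      forall z, 0 <= z <= delta / eps ->
        (forall i, V' z i = V z i) /\ (forall j, W' z j = W z j).
Proof.
  destruct Hsm as [d0 [Hd0 [SP [SL SU]]]].
  destruct (coefficient_bounds _ _ Psi Lam Ups Ubar d0 Hd0 SP SL SU)
    as [rho [Lc [Bp [Hrho [HLc [HBp [LP [LL [LU HPB]]]]]]]]].
  assert (HN : 1 <= INR (k + m)) by (apply (le_INR 1); lia).
  assert (HK : 1 <= INR k) by (apply (le_INR 1); lia).
  assert (Hlb : forall i, lam (Fin.L m i) Ubar <= - c).
  { intros i. left. apply Hneg. rewrite Fin.L_sanity. apply proj2_sig. }
  destruct (small_delta_admissible (INR (k + m)) (INR k) c rho Lc Bp HN HK Hc Hrho HLc HBp) as [dstar [Hds Hadm]].
  destruct (cW0_bounds (INR (k + m)) c Bp HN Hc HBp) as [[Hw0 Hw1] _].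
  exists dstar. split; auto. intros delta Hdelta.
  exists (1 / 2), (cW0 (INR (k + m)) c Bp / (2 * INR k)), (cW0 (INR (k + m)) c Bp).
  split; [lra|]. split; [split; [apply Rdiv_lt_0_compat; lra|apply Rmult_lt_reg_r with (2 * INR k); [lra|]]|].
  { unfold Rdiv. rewrite Rmult_assoc, Rinv_l by lra. lra. }
  split; [lra|].
  destruct (HUeps (delta / (4 * INR (k + m)))) as [e1 [He1 HU]]; [apply Rdiv_lt_0_compat; lra|].
  exists (Rmin delta e1). split; [apply Rmin_glb_lt; lra|]. intros eps Heps Wbar HWbar.
  pose proof (Rmin_l delta e1). pose proof (Rmin_r delta e1).
  apply (solution_small_data _ _ Psi Lam Ups Ubar (fun i => lam (Fin.L m i) Ubar) c rho Lc Bp); auto; try lra.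
  left. apply HU. lra.
Qed.
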